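(* Let $r\in(0,R_0]$, $\mu\ge0$, and let $\phi$ be continuous on $A_r$, vanishing at infinity, and satisfying $\Delta\phi=4\pi c_{\mathrm{TF}}^{-3/2}[\phi-\mu]_+^{3/2}$ in $A_r$. Assume $\lim_{s\to r^+}\inf_{\partial A_s}\phi>\mu$. Define \[a(r)=\liminf_{s\to r^+}\sup_{\partial A_s}\Big(\sqrt{c_{\mathrm S}r^{-4}\phi^{-1}}-1\Big),\qquad \omega_a^-(x)=c_{\mathrm S}|x|^{-4}\big(1+a(r)(r|x|^{-1})^\xi\big)^{-2},\] \[A(r)=\liminf_{s\to r^+}\sup_{\partial A_s}\Big(c_{\mathrm S}^{-1}s^4(\phi-\mu)-1\Big),\qquad \omega_A^+(x)=c_{\mathrm S}|x|^{-4}\big(1+A(r)(r|x|^{-1})^\xi\big),\] and $\nu(\mu,r)=\inf_{|x|\ge r}\max\{\mu|x|,\ \omega_a^-(x)|x|\}$. Then for every $x\in A_r$, \[\max\Big\{\max_{1\le j\le K}\omega_a^-(x-R_j),\ \max_{1\le j\le K}\frac{\nu(\mu,r)}{|x-R_j|}\Big\}\le\phi(x)\le\sum_{j=1}^K\omega_A^+(x-R_j)+\mu.\]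
   Context: Pairwise distinct points $R_1,\dots,R_K\in\mathbb{R}^3$ are given; $R_{\min}=\min_{i\ne j}|R_i-R_j|$ ($=+\infty$ if $K=1$), $R_0=\min\{1,R_{\min}/4\}$, and for $r>0$, $A_r=\{x\in\mathbb{R}^3:|x-R_j|>r\text{ for all }j\}$, with boundary $\partial A_r$. Constants: $c_{\mathrm{TF}}=\frac12(3\pi^2)^{2/3}$, $c_{\mathrm S}=3^4 2^{-3}\pi^2$, $\xi=(-7+\sqrt{73})/2$. $[t]_+=\max\{t,0\}$. *)

From Stdlib Require Import Reals Lra List.
From Coquelicot Require Import Coquelicot.
Open Scope R_scope.

Definition pt : Type := (R * R * R)%type.

Definition psub (x y : pt) : pt :=
  match x, y with ((x1, x2), x3), ((y1, y2), y3) => ((x1 - y1, x2 - y2), x3 - y3) end.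

Definition pnorm (x : pt) : R :=
  match x with ((x1, x2), x3) => sqrt (x1 ^ 2 + x2 ^ 2 + x3 ^ 2) end.

Definition pdist (x y : pt) : R := pnorm (psub x y).

(* x + t e_i, with e_0, e_1, e_2 the standard basis (i >= 2 gives e_2) *)
Definition shift (i : nat) (t : R) (x : pt) : pt :=
  match x with ((x1, x2), x3) =>
    match i with
    | O => ((x1 + t, x2), x3)
    | S O => ((x1, x2 + t), x3)
    | _ => ((x1, x2), x3 + t)
    end
  end.

Definition pd (i : nat) (f : pt -> R) (x : pt) : R :=
  Derive (fun t => f (shift i t x)) 0.

Definition laplacian (f : pt -> R) (x : pt) : R :=
  pd 0 (pd 0 f) x + pd 1 (pd 1 f) x + pd 2 (pd 2 f) x.

Definition C2_on (U : pt -> Prop) (f : pt -> R) : Prop :=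
  forall x, U x ->
    continuous f x /\
    forall i j, (i < 3)%nat -> (j < 3)%nat ->
      ex_derive (fun t => f (shift i t x)) 0 /\
      ex_derive (fun t => pd j f (shift i t x)) 0 /\
      continuous (pd i f) x /\
      continuous (pd i (pd j f)) x.

Definition c_TF : R := / 2 * Rpower (3 * PI ^ 2) (2 / 3).
Definition c_S : R := 3 ^ 4 * / 2 ^ 3 * PI ^ 2.
Definition xi : R := (-7 + sqrt 73) / 2.

Definition pos_part (t : R) : R := Rmax t 0.
Definition pos32 (t : R) : R := pos_part t * sqrt (pos_part t).

Definition A_set (K : nat) (Rs : nat -> pt) (r : R) (x : pt) : Prop :=
  forall j, (j < K)%nat -> r < pdist x (Rs j).

Definition bdA (K : nat) (Rs : nat -> pt) (s : R) (x : pt) : Prop :=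
  (forall j, (j < K)%nat -> s <= pdist x (Rs j)) /\
  (exists j, (j < K)%nat /\ pdist x (Rs j) = s).

(* r <= R_0 = min {1, R_min / 4}, R_min = min_{i<>j} |R_i - R_j| (+oo if K = 1) *)
Definition le_R0 (K : nat) (Rs : nat -> pt) (r : R) : Prop :=
  r <= 1 /\
  forall i j, (i < K)%nat -> (j < K)%nat -> i <> j -> r <= pdist (Rs i) (Rs j) / 4.

Definition inf_bd (K : nat) (Rs : nat -> pt) (f : pt -> R) (s : R) : Rbar :=
  Rbar_glb (fun y => exists x, bdA K Rs s x /\ y = Finite (f x)).
Definition sup_bd (K : nat) (Rs : nat -> pt) (f : pt -> R) (s : R) : Rbar :=
  Rbar_lub (fun y => exists x, bdA K Rs s x /\ y = Finite (f x)).

Definition eventually_right (r : R) (P : R -> Prop) : Prop :=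
  exists d, 0 < d /\ forall s, r < s < r + d -> P s.

Definition lim_right_Rbar (g : R -> Rbar) (r : R) (L : Rbar) : Prop :=
  (forall a : R, Rbar_lt (Finite a) L -> eventually_right r (fun s => Rbar_lt (Finite a) (g s))) /\
  (forall b : R, Rbar_lt L (Finite b) -> eventually_right r (fun s => Rbar_lt (g s) (Finite b))).

Definition liminf_right (g : R -> Rbar) (r : R) : Rbar :=
  Rbar_lub (fun y => exists d, 0 < d /\
    y = Rbar_glb (fun z => exists s, r < s < r + d /\ z = g s)).

Definition a_of (K : nat) (Rs : nat -> pt) (phi : pt -> R) (r : R) : Rbar :=
  liminf_right (fun s => sup_bd K Rs (fun x => sqrt (c_S * / r ^ 4 * / phi x) - 1) s) r.

Definition A_of (K : nat) (Rs : nat -> pt) (phi : pt -> R) (mu r : R) : Rbar :=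
  liminf_right (fun s => sup_bd K Rs (fun x => / c_S * s ^ 4 * (phi x - mu) - 1) s) r.

(* omega_a^-(x) = c_S |x|^-4 (1 + a (r/|x|)^xi)^-2; value +oo where the
   bracket vanishes *)
Definition omega_minus (a r : R) (x : pt) : Rbar :=
  let d := 1 + a * Rpower (r / pnorm x) xi in
  if Req_EM_T d 0 then p_infty else Finite (c_S * / pnorm x ^ 4 * / d ^ 2).

Definition omega_plus (A r : R) (x : pt) : R :=
  c_S * / pnorm x ^ 4 * (1 + A * Rpower (r / pnorm x) xi).

Definition Rbar_maxr (u v : Rbar) : Rbar := if Rbar_lt_dec u v then v else u.

Definition nu (a mu r : R) : Rbar :=
  Rbar_glb (fun y => exists x, r <= pnorm x /\
    y = Rbar_maxr (Finite (mu * pnorm x)) (Rbar_mult (omega_minus a r x) (Finite (pnorm x)))).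

Definition sum_nuclei (K : nat) (f : nat -> R) : R :=
  fold_right Rplus 0 (map f (seq 0 K)).

(** Each bound comes from comparing [phi] on an exterior domain [A_s], with [s]
    slightly above [r], with an explicit radial function of the distances to the
    nuclei, and then letting [s] decrease to [r].

    With [u = 1 + b (r/rho)^xi], the profile [c_S rho^-4 u^-2] satisfies
    [Delta w >= tf_coeff w^(3/2)] and [c_S rho^-4 u] satisfies the reverse
    inequality; both reduce to sign conditions on polynomials in [u] because
    [xi^2 + 7 xi - 6 = 0].  Since [t^(3/2)] is superadditive, the sum over the
    nuclei of the second profile plus [mu] stays a supersolution of
    [Delta phi = tf_coeff [phi - mu]_+^(3/2)].  The numbers [a(r)] and [A(r)]
    are precisely the parameters for which these functions are below,
    resp. above, [phi] on [dA_s] for [s] close to [r], up to an arbitrarily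
    small change of [b].  For [nu], the strictly subharmonic function
    [(nu - eta)/rho + eta r/rho^2] lies below [Rmax mu phi] on [dA_s] and
    cannot exceed [phi] inside, where it would have to do so in the region
    [phi < mu] in which [phi] is harmonic.

    The comparison itself is a maximum principle: a positive maximum of the
    difference is attained (both functions tend to their limits at infinity)
    at an interior point, where second derivatives along the coordinate axes
    contradict the differential inequalities. *)

From Stdlib Require Import Reals List Lra Lia Psatz ClassicalEpsilon Classical.
From Coquelicot Require Import Coquelicot.
Open Scope R_scope.

Local Notation lsum f l := (fold_right Rplus 0 (map f l)).

Definition coord (i : nat) (y : pt) : R :=
  match y with ((a, b), c) => match i with O => a | S O => b | _ => c end end.

Definition origin : pt := ((0, 0), 0).

Lemma pt_eq (a b c d e f : R) : a = d -> b = e -> c = f -> ((a, b), c) = ((d, e), f).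
Proof. intros; subst; reflexivity. Qed.

Lemma Cauchy_Schwarz3 a b c d e f :
  (a * d + b * e + c * f) ^ 2 <= (a ^ 2 + b ^ 2 + c ^ 2) * (d ^ 2 + e ^ 2 + f ^ 2).
Proof.
  assert (Lagrange : (a ^ 2 + b ^ 2 + c ^ 2) * (d ^ 2 + e ^ 2 + f ^ 2) - (a * d + b * e + c * f) ^ 2
                     = (a * e - b * d) ^ 2 + (a * f - c * d) ^ 2 + (b * f - c * e) ^ 2) by ring.
  pose proof (pow2_ge_0 (a * e - b * d)); pose proof (pow2_ge_0 (a * f - c * d));
  pose proof (pow2_ge_0 (b * f - c * e)); lra.
Qed.

Lemma sqrt_le_of_le_sqr x y : 0 <= y -> x <= y * y -> sqrt x <= y.
Proof. intros Hy Hx. rewrite <- (sqrt_square y Hy). apply sqrt_le_1_alt, Hx. Qed.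

Lemma pdist_triangle x y z : pdist x z <= pdist x y + pdist y z.
Proof.
  destruct x as [[x1 x2] x3], y as [[y1 y2] y3], z as [[z1 z2] z3]; unfold pdist, psub, pnorm.
  set (a := x1 - y1); set (b := x2 - y2); set (c := x3 - y3).
  set (d := y1 - z1); set (e := y2 - z2); set (f := y3 - z3).
  replace (x1 - z1) with (a + d) by (unfold a, d; ring).
  replace (x2 - z2) with (b + e) by (unfold b, e; ring).
  replace (x3 - z3) with (c + f) by (unfold c, f; ring).
  set (B := a ^ 2 + b ^ 2 + c ^ 2); set (C := d ^ 2 + e ^ 2 + f ^ 2).
  assert (HB : 0 <= B) by (unfold B; nra). assert (HC : 0 <= C) by (unfold C; nra).
  pose proof (sqrt_pos B); pose proof (sqrt_pos C).
  pose proof (sqrt_sqrt B HB); pose proof (sqrt_sqrt C HC).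
  assert (Hdot : a * d + b * e + c * f <= sqrt B * sqrt C).
  { apply Rsqr_incr_0_var; [|apply Rmult_le_pos; assumption].
    unfold Rsqr. replace (sqrt B * sqrt C * (sqrt B * sqrt C)) with (B * C) by nra.
    pose proof (Cauchy_Schwarz3 a b c d e f); unfold B, C; nra. }
  apply sqrt_le_of_le_sqr; [lra|]. unfold B, C in *. nra.
Qed.

Lemma pdist_sym x y : pdist x y = pdist y x.
Proof.
  destruct x as [[x1 x2] x3], y as [[y1 y2] y3]; unfold pdist, psub, pnorm.
  f_equal; ring.
Qed.

Lemma pdist_origin y : pdist y origin = pnorm y.
Proof. destruct y as [[a b] c]; unfold pdist, psub, pnorm, origin. f_equal; ring. Qed.

Lemma pnorm_le_pdist x y : pnorm x <= pdist x y + pnorm y.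
Proof. rewrite <- !pdist_origin. apply pdist_triangle. Qed.

Lemma pdist_lipschitz x y c : Rabs (pdist y c - pdist x c) <= pdist y x.
Proof.
  pose proof (pdist_triangle y x c); pose proof (pdist_triangle x y c).
  rewrite (pdist_sym x y) in *. apply Rabs_le; lra.
Qed.

Lemma pnorm_ge0 y : 0 <= pnorm y.
Proof. destruct y as [[a b] c]. apply sqrt_pos. Qed.

Lemma pnorm_sqr y : pnorm y ^ 2 = coord 0 y ^ 2 + coord 1 y ^ 2 + coord 2 y ^ 2.
Proof.
  destruct y as [[a b] c]; unfold pnorm; simpl coord.
  rewrite <- Rsqr_pow2, Rsqr_sqrt by nra. ring.
Qed.

Lemma Rabs_coord_le_pnorm i y : Rabs (coord i y) <= pnorm y.
Proof.
  rewrite <- sqrt_Rsqr_abs. destruct y as [[a b] c]; unfold pnorm.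
  apply sqrt_le_1_alt. unfold Rsqr; destruct i as [|[|i]]; simpl; nra.
Qed.

Lemma pnorm_le_sum_Rabs_coord y :
  pnorm y <= Rabs (coord 0 y) + Rabs (coord 1 y) + Rabs (coord 2 y).
Proof.
  destruct y as [[a b] c]; unfold pnorm; simpl coord.
  pose proof (Rabs_pos a); pose proof (Rabs_pos b); pose proof (Rabs_pos c).
  apply sqrt_le_of_le_sqr; [lra|].
  rewrite <- (pow2_abs a), <- (pow2_abs b), <- (pow2_abs c). nra.
Qed.

Lemma shift_0 i x : shift i 0 x = x.
Proof. destruct x as [[a b] c]; destruct i as [|[|i]]; simpl; apply pt_eq; ring. Qed.

Lemma shift_shift i t u x : shift i u (shift i t x) = shift i (t + u) x.
Proof. destruct x as [[a b] c]; destruct i as [|[|i]]; simpl; apply pt_eq; ring. Qed.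

Lemma psub_shift i t x c : psub (shift i t x) c = shift i t (psub x c).
Proof.
  destruct x as [[a b] d], c as [[e f] g]; destruct i as [|[|i]]; simpl; apply pt_eq; ring.
Qed.

Lemma pnorm_shift i t y :
  pnorm (shift i t y) = sqrt (pnorm y ^ 2 + 2 * t * coord i y + t ^ 2).
Proof.
  rewrite pnorm_sqr. destruct y as [[a b] c]; destruct i as [|[|i]]; unfold pnorm; simpl;
  f_equal; ring.
Qed.

Lemma pdist_shift_self i t x : pdist (shift i t x) x = Rabs t.
Proof.
  destruct x as [[a b] c]; destruct i as [|[|i]]; unfold pdist, pnorm; simpl;
  rewrite <- sqrt_Rsqr_abs; f_equal; unfold Rsqr; ring.
Qed.

Lemma pdist_shift i t x c : Rabs (pdist (shift i t x) c - pdist x c) <= Rabs t.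
Proof. rewrite <- (pdist_shift_self i t x). apply pdist_lipschitz. Qed.

Definition inbox (c : pt) (h : R) (x : pt) : Prop :=
  Rabs (coord 0 x - coord 0 c) <= h /\ Rabs (coord 1 x - coord 1 c) <= h /\
  Rabs (coord 2 x - coord 2 c) <= h.

Lemma inbox_le c h h' x : h <= h' -> inbox c h x -> inbox c h' x.
Proof. unfold inbox; intros; lra. Qed.

Lemma pdist_le_inbox c h x : inbox c h x -> pdist x c <= 3 * h.
Proof.
  intros (H0 & H1 & H2). unfold pdist.
  eapply Rle_trans; [apply pnorm_le_sum_Rabs_coord|].
  destruct x as [[a b] d], c as [[e f] g]; simpl in *. lra.
Qed.

Lemma inbox_origin_pnorm x : inbox origin (pnorm x) x.
Proof.
  pose proof (Rabs_coord_le_pnorm 0 x); pose proof (Rabs_coord_le_pnorm 1 x);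
  pose proof (Rabs_coord_le_pnorm 2 x).
  unfold inbox, origin; destruct x as [[a b] c]; simpl in *. rewrite !Rminus_0_r. auto.
Qed.

Definition box_continuous (f : pt -> R) (x : pt) : Prop :=
  forall e, 0 < e -> exists d, 0 < d /\ forall y, inbox x d y -> Rabs (f y - f x) < e.

Definition A_closure (K : nat) (Rs : nat -> pt) (s : R) (x : pt) : Prop :=
  forall j, (j < K)%nat -> s <= pdist x (Rs j).

Lemma exists_pos_lower_bound (K : nat) (h : nat -> R) :
  (forall j, (j < K)%nat -> 0 < h j) -> exists d, 0 < d /\ forall j, (j < K)%nat -> d <= h j.
Proof.
  induction K as [|K IH]; intros H.
  - exists 1. split; [lra | intros; lia].
  - destruct IH as (d & Hd & Hd2); [intros; apply H; lia|].
    exists (Rmin d (h K)). split; [apply Rmin_pos; auto; apply H; lia|].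
    intros j Hj. destruct (Nat.eq_dec j K) as [->|Hn]; [apply Rmin_r|].
    eapply Rle_trans; [apply Rmin_l | apply Hd2; lia].
Qed.

Lemma A_set_margin K Rs r z :
  A_set K Rs r z -> exists d, 0 < d /\ forall s, s < r + d -> A_set K Rs s z.
Proof.
  intros Hz. destruct (exists_pos_lower_bound K (fun j => pdist z (Rs j) - r)) as (d & Hd & Hd2).
  { intros j Hj. specialize (Hz j Hj). lra. }
  exists d. split; auto. intros s Hs j Hj. specialize (Hd2 j Hj). lra.
Qed.

Lemma A_set_shift_closure K Rs s x :
  A_set K Rs s x -> exists d, 0 < d /\ forall i t, Rabs t < d -> A_closure K Rs s (shift i t x).
Proof.
  intros Hx. destruct (exists_pos_lower_bound K (fun j => pdist x (Rs j) - s)) as (d & Hd & Hd2).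
  { intros j Hj. specialize (Hx j Hj). lra. }
  exists d. split; auto. intros i t Ht j Hj.
  pose proof (pdist_shift i t x (Rs j)) as H. apply Rabs_le_between in H.
  specialize (Hd2 j Hj). lra.
Qed.

Lemma sum_map_ext {A} (l : list A) (a b : A -> R) :
  (forall j, In j l -> a j = b j) -> lsum a l = lsum b l.
Proof. induction l; simpl; intros H; auto. rewrite H, IHl; auto. Qed.

Lemma sum_map_plus {A} (l : list A) (a b : A -> R) :
  lsum (fun j => a j + b j) l = lsum a l + lsum b l.
Proof. induction l; simpl; [ring | rewrite IHl; ring]. Qed.

Lemma sum_map_scal {A} (l : list A) (a : A -> R) c :
  lsum (fun j => c * a j) l = c * lsum a l.
Proof. induction l; simpl; [ring | rewrite IHl; ring]. Qed.

Lemma sum_map_le {A} (l : list A) (a b : A -> R) :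
  (forall j, In j l -> a j <= b j) -> lsum a l <= lsum b l.
Proof.
  induction l as [|x l IH]; simpl; intros H; [lra|].
  pose proof (H x (or_introl eq_refl)). pose proof (IH (fun j Hj => H j (or_intror Hj))). lra.
Qed.

Lemma sum_map_nonneg {A} (l : list A) (a : A -> R) :
  (forall j, In j l -> 0 <= a j) -> 0 <= lsum a l.
Proof.
  induction l as [|x l IH]; simpl; intros H; [lra|].
  pose proof (H x (or_introl eq_refl)). pose proof (IH (fun j Hj => H j (or_intror Hj))). lra.
Qed.

Lemma sum_map_ge_term {A} (l : list A) (a : A -> R) x :
  In x l -> (forall j, In j l -> 0 <= a j) -> a x <= lsum a l.
Proof.
  induction l as [|y l IH]; simpl; intros Hx H; [contradiction|].
  pose proof (sum_map_nonneg l a (fun j Hj => H j (or_intror Hj))).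
  pose proof (H y (or_introl eq_refl)).
  destruct Hx as [<-|Hx]; [lra|]. pose proof (IH Hx (fun j Hj => H j (or_intror Hj))). lra.
Qed.

Lemma sum_map_pow32_le {A} (l : list A) (a : A -> R) :
  (forall j, In j l -> 0 <= a j) ->
  lsum (fun j => a j * sqrt (a j)) l <= lsum a l * sqrt (lsum a l).
Proof.
  induction l as [|y l IH]; simpl; intros H; [rewrite sqrt_0; lra|].
  pose proof (sum_map_nonneg l a (fun j Hj => H j (or_intror Hj))) as HS.
  pose proof (IH (fun j Hj => H j (or_intror Hj))).
  pose proof (H y (or_introl eq_refl)).
  assert (sqrt (lsum a l) <= sqrt (a y + lsum a l)) by (apply sqrt_le_1_alt; lra).
  assert (sqrt (a y) <= sqrt (a y + lsum a l)) by (apply sqrt_le_1_alt; lra).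
  pose proof (sqrt_pos (lsum a l)); pose proof (sqrt_pos (a y)). nra.
Qed.

Lemma in_seq0 K j : In j (seq 0 K) -> (j < K)%nat.
Proof. intros H. apply in_seq in H. lia. Qed.

(** * Maxima of upper semicontinuous functions *)

(** Bisection: [sup_approached_in X] says that values of [f] arbitrarily close
    to its supremum over [Dom] are taken in [X]; one of the eight half-size
    sub-boxes of a box with this property inherits it, and the nested boxes
    shrink to a maximiser. *)
Section Extreme_value.
Variables (Dom : pt -> Prop) (f : pt -> R).

Definition sup_approached_in (X : pt -> Prop) : Prop :=
  forall y, Dom y -> forall e, 0 < e -> exists z, Dom z /\ X z /\ f y - e < f z.

Lemma sup_approached_in_mono (X Y : pt -> Prop) :
  (forall z, X z -> Y z) -> sup_approached_in X -> sup_approached_in Y.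
Proof.
  intros HXY HQ y Dy e He. destruct (HQ y Dy e He) as (z & ? & ? & ?). exists z; auto.
Qed.

Lemma sup_approached_in_union (X Y1 Y2 : pt -> Prop) :
  (forall z, X z -> Y1 z \/ Y2 z) -> sup_approached_in X ->
  sup_approached_in Y1 \/ sup_approached_in Y2.
Proof.
  intros HS HQ. apply NNPP. intros Hn. apply not_or_and in Hn as [n1 n2].
  assert (Hbad : forall Y, ~ sup_approached_in Y ->
            exists y e, Dom y /\ 0 < e /\ forall z, Dom z -> Y z -> f z <= f y - e).
  { intros Y nY. apply NNPP; intro C. apply nY. intros y Dy e He.
    apply NNPP; intro C2. apply C. exists y, e. repeat split; auto.
    intros z Dz Yz. apply Rnot_lt_le. intro. apply C2. exists z; auto. }
  destruct (Hbad _ n1) as (y1 & e1 & D1 & E1 & H1).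
  destruct (Hbad _ n2) as (y2 & e2 & D2 & E2 & H2).
  destruct (Rle_or_lt (f y1 - e1) (f y2 - e2)) as [Hl|Hl].
  - destruct (HQ y2 D2 e2 E2) as (z & Dz & Xz & Fz).
    destruct (HS z Xz) as [Y|Y]; [specialize (H1 z Dz Y) | specialize (H2 z Dz Y)]; lra.
  - destruct (HQ y1 D1 e1 E1) as (z & Dz & Xz & Fz).
    destruct (HS z Xz) as [Y|Y]; [specialize (H1 z Dz Y) | specialize (H2 z Dz Y)]; lra.
Qed.

Definition half_side (c : pt) (i : nat) (b : bool) (x : pt) : Prop :=
  if b then coord i c <= coord i x else coord i x <= coord i c.

Lemma sup_approached_in_half_side (X : pt -> Prop) c i :
  sup_approached_in X -> exists b, sup_approached_in (fun x => X x /\ half_side c i b x).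
Proof.
  intros HQ.
  destruct (sup_approached_in_union X (fun x => X x /\ half_side c i true x)
                                      (fun x => X x /\ half_side c i false x)) as [H|H]; eauto.
  intros z Xz. unfold half_side.
  destruct (Rle_or_lt (coord i c) (coord i z)); [left | right]; split; auto; lra.
Qed.

Definition sign (b : bool) : R := if b then 1 else -1.

Definition sub_center (c : pt) (h : R) (b0 b1 b2 : bool) : pt :=
  ((coord 0 c + sign b0 * (h / 2), coord 1 c + sign b1 * (h / 2)), coord 2 c + sign b2 * (h / 2)).

Lemma half_side_sub_box c h b x i :
  Rabs (coord i x - coord i c) <= h -> half_side c i b x ->
  Rabs (coord i x - (coord i c + sign b * (h / 2))) <= h / 2.
Proof.
  unfold half_side, sign; intros H1 H2. apply Rabs_le. apply Rabs_le_between in H1.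
  destruct b; lra.
Qed.

Lemma sup_approached_in_sub_box c h :
  0 <= h -> sup_approached_in (inbox c h) ->
  exists c', inbox c (h / 2) c' /\ sup_approached_in (inbox c' (h / 2)).
Proof.
  intros Hh HQ.
  destruct (sup_approached_in_half_side _ c 0 HQ) as [b0 H0].
  destruct (sup_approached_in_half_side _ c 1 H0) as [b1 H1].
  destruct (sup_approached_in_half_side _ c 2 H1) as [b2 H2].
  exists (sub_center c h b0 b1 b2). split.
  - destruct c as [[c0 c1] c2]; unfold inbox, sub_center, sign; simpl.
    destruct b0, b1, b2; repeat split; apply Rabs_le; lra.
  - eapply sup_approached_in_mono; [|exact H2].
    intros x [[[[B0 [B1 B2]] S0] S1] S2].
    pose proof (half_side_sub_box c h b0 x 0 B0 S0).
    pose proof (half_side_sub_box c h b1 x 1 B1 S1).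
    pose proof (half_side_sub_box c h b2 x 2 B2 S2).
    unfold inbox, sub_center; destruct x as [[? ?] ?]; simpl in *. auto.
Qed.

Variables (c0 : pt) (h0 : R).
Hypothesis h0_ge0 : 0 <= h0.
Hypothesis Dom_bounded : forall x, Dom x -> inbox c0 h0 x.

Definition width (n : nat) : R := h0 * (/ 2) ^ n.

Lemma width_S n : width (S n) = width n / 2.
Proof. unfold width; simpl; field. Qed.

Lemma width_ge0 n : 0 <= width n.
Proof. unfold width. apply Rmult_le_pos; auto. apply pow_le; lra. Qed.

Lemma width_small d : 0 < d -> exists n, 2 * width n < d.
Proof.
  intros Hd. destruct (pow_lt_1_zero (/ 2) ltac:(rewrite Rabs_pos_eq; lra) (d / (2 * h0 + 1)))
    as [N HN]; [apply Rdiv_lt_0_compat; lra|].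
  exists N. specialize (HN N (Nat.le_refl N)).
  rewrite Rabs_pos_eq in HN by (apply pow_le; lra). unfold width.
  apply Rmult_lt_compat_l with (r := 2 * h0 + 1) in HN; [|lra].
  replace ((2 * h0 + 1) * (d / (2 * h0 + 1))) with d in HN by (field; lra).
  pose proof (pow_le (/ 2) N ltac:(lra)). nra.
Qed.

Definition next_center (n : nat) (c c' : pt) : Prop :=
  inbox c (width n / 2) c' /\ sup_approached_in (inbox c' (width n / 2)).

Fixpoint center (n : nat) : pt :=
  match n with O => c0 | S m => epsilon (inhabits c0) (next_center m (center m)) end.

Lemma center_spec n :
  sup_approached_in (inbox (center n) (width n)) /\ next_center n (center n) (center (S n)).
Proof.
  assert (HQ : forall n, sup_approached_in (inbox (center n) (width n))).
  { induction n0 as [|n0 IH].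
    - intros y Dy e He. exists y. split; [exact Dy | split; [|lra]].
      unfold width; simpl. rewrite Rmult_1_r. auto.
    - simpl. rewrite width_S.
      apply (epsilon_spec (inhabits c0) (next_center n0 (center n0))).
      apply sup_approached_in_sub_box; auto. apply width_ge0. }
  split; auto. apply (epsilon_spec (inhabits c0) (next_center n (center n))).
  apply sup_approached_in_sub_box; auto. apply width_ge0.
Qed.

Definition lower (i n : nat) : R := coord i (center n) - width n.
Definition upper (i n : nat) : R := coord i (center n) + width n.

Lemma lower_upper_step i n :
  lower i n <= lower i (S n) /\ upper i (S n) <= upper i n /\ lower i n <= upper i n.
Proof.
  destruct (center_spec n) as [_ [Hc _]].
  assert (H : Rabs (coord i (center (S n)) - coord i (center n)) <= width n / 2)
    by (destruct Hc as (A0 & A1 & A2); destruct i as [|[|[|i]]]; auto).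
  apply Rabs_le_between in H. unfold lower, upper. rewrite width_S.
  pose proof (width_ge0 n). lra.
Qed.

Lemma lower_le_upper i m n : lower i m <= upper i n.
Proof.
  assert (Hmono : forall n k, lower i n <= lower i (n + k) /\ upper i (n + k) <= upper i n).
  { intros n0 k. induction k as [|k IH]; [rewrite Nat.add_0_r; lra|].
    replace (n0 + S k)%nat with (S (n0 + k)) by lia.
    pose proof (lower_upper_step i (n0 + k)). lra. }
  destruct (Nat.le_ge_cases m n) as [H|H].
  - destruct (Hmono m (n - m)%nat) as [A _]. replace (m + (n - m))%nat with n in A by lia.
    pose proof (lower_upper_step i n). lra.
  - destruct (Hmono n (m - n)%nat) as [_ A]. replace (n + (m - n))%nat with m in A by lia.
    pose proof (lower_upper_step i m). lra.
Qed.

Definition limit_coord (i : nat) : R.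
Proof.
  destruct (completeness (fun v => exists n, v = lower i n)) as [l _].
  - exists (upper i 0). intros v [n ->]. apply lower_le_upper.
  - exists (lower i 0); eauto.
  - exact l.
Defined.

Lemma limit_coord_spec i n : lower i n <= limit_coord i <= upper i n.
Proof.
  unfold limit_coord. destruct (completeness _ _ _) as [l [Hub Hl]]. split.
  - apply Hub. eauto.
  - apply Hl. intros v [m ->]. apply lower_le_upper.
Qed.

Definition limit_center : pt := ((limit_coord 0, limit_coord 1), limit_coord 2).

Lemma inbox_limit_center n z : inbox (center n) (width n) z -> inbox limit_center (2 * width n) z.
Proof.
  intros (B0 & B1 & B2).
  pose proof (limit_coord_spec 0 n); pose proof (limit_coord_spec 1 n);
  pose proof (limit_coord_spec 2 n).
  unfold lower, upper, inbox, limit_center in *; simpl coord.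
  apply Rabs_le_between in B0; apply Rabs_le_between in B1; apply Rabs_le_between in B2.
  repeat split; apply Rabs_le; lra.
Qed.

Lemma limit_center_approx n y : Dom y -> forall e, 0 < e ->
  exists z, Dom z /\ inbox limit_center (2 * width n) z /\ f y - e < f z.
Proof.
  intros Dy e He. destruct (proj1 (center_spec n) y Dy e He) as (z & Dz & Bz & Fz).
  exists z. split; [exact Dz | split; [apply inbox_limit_center, Bz | exact Fz]].
Qed.

Hypothesis Dom_nonempty : exists x, Dom x.
Hypothesis Dom_closed : forall x, ~ Dom x -> exists d, 0 < d /\ forall y, inbox x d y -> ~ Dom y.
Hypothesis f_usc : forall x, Dom x -> forall e, 0 < e ->
  exists d, 0 < d /\ forall y, Dom y -> inbox x d y -> f y < f x + e.

Theorem usc_attains_max : exists x, Dom x /\ forall y, Dom y -> f y <= f x.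
Proof.
  assert (Hlim : Dom limit_center).
  { apply NNPP. intros nD. destruct (Dom_closed _ nD) as (d & Hd & Hn).
    destruct (width_small d Hd) as [n Hn'].
    destruct Dom_nonempty as [y0 Dy0].
    destruct (limit_center_approx n y0 Dy0 1 Rlt_0_1) as (z & Dz & Bz & _).
    apply (Hn z); auto. eapply inbox_le; [|exact Bz]. lra. }
  exists limit_center. split; auto. intros y Dy. apply Rnot_lt_le. intros Hlt.
  set (e := (f y - f limit_center) / 2).
  assert (He : 0 < e) by (unfold e; lra).
  destruct (f_usc limit_center Hlim e He) as (d & Hd & Hc).
  destruct (width_small d Hd) as [n Hn'].
  destruct (limit_center_approx n y Dy e He) as (z & Dz & Bz & Fz).
  assert (Bz' : inbox limit_center d z) by (apply (inbox_le _ (2 * width n)); [lra | exact Bz]).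
  specialize (Hc z Dz Bz'). unfold e in *. lra.
Qed.

End Extreme_value.

Lemma exterior_max_principle K Rs s (w : pt -> R) :
  (forall x, A_closure K Rs s x -> forall e, 0 < e -> exists d, 0 < d /\
      forall y, A_closure K Rs s y -> inbox x d y -> w y < w x + e) ->
  (forall x, bdA K Rs s x -> w x <= 0) ->
  (forall e, 0 < e -> exists M, forall x, A_closure K Rs s x -> M < pnorm x -> w x < e) ->
  (forall x0, A_set K Rs s x0 -> 0 < w x0 -> (forall y, A_closure K Rs s y -> w y <= w x0) -> False) ->
  forall x, A_set K Rs s x -> w x <= 0.
Proof.
  intros Husc Hbd Hinf Hnomax x1 Hx1. apply Rnot_lt_le. intros Hw1.
  destruct (Hinf (w x1) Hw1) as [M HM].
  set (M' := Rmax M (pnorm x1)).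
  set (Dom := fun x => A_closure K Rs s x /\ pnorm x <= M').
  assert (Hcl1 : A_closure K Rs s x1) by (intros j Hj; specialize (Hx1 j Hj); lra).
  destruct (usc_attains_max Dom w origin M') as (x0 & [Hx0 Hx0'] & Hmax).
  - pose proof (pnorm_ge0 x1); pose proof (Rmax_r M (pnorm x1)). unfold M'. lra.
  - intros x [_ Hx]. apply (inbox_le _ (pnorm x)); auto. apply inbox_origin_pnorm.
  - exists x1. split; auto. apply Rmax_r.
  - intros x Hn. apply not_and_or in Hn as [Hn|Hn].
    + apply not_all_ex_not in Hn as [j Hj]. apply imply_to_and in Hj as [Hj Hlt].
      apply Rnot_le_lt in Hlt. exists ((s - pdist x (Rs j)) / 4). split; [lra|].
      intros y Hy [Hy1 _]. specialize (Hy1 j Hj). apply pdist_le_inbox in Hy.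
      pose proof (pdist_triangle y x (Rs j)). lra.
    + apply Rnot_le_lt in Hn. exists ((pnorm x - M') / 4). split; [lra|].
      intros y Hy [_ Hy2]. apply pdist_le_inbox in Hy.
      pose proof (pnorm_le_pdist x y) as Ht. rewrite pdist_sym in Ht. lra.
  - intros x [Hx _] e He. destruct (Husc x Hx e He) as (d & Hd & Hd2). exists d; split; auto.
    intros y [Hy _] Hy'. auto.
  - assert (Hw0 : w x1 <= w x0) by (apply Hmax; split; auto; apply Rmax_r).
    apply (Hnomax x0); [| lra |].
    + intros j Hj. destruct (Rle_lt_or_eq_dec _ _ (Hx0 j Hj)) as [H|H]; auto.
      exfalso. assert (Hb : bdA K Rs s x0) by (split; auto; exists j; auto).
      specialize (Hbd x0 Hb). lra.
    + intros y Hy. destruct (Rle_or_lt (pnorm y) M') as [H|H]; [apply Hmax; split; auto|].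
      assert (M < pnorm y) by (pose proof (Rmax_l M (pnorm x1)); unfold M' in *; lra).
      specialize (HM y Hy H0). lra.
Qed.

Lemma is_derive_Rplus (f g : R -> R) x a b :
  is_derive f x a -> is_derive g x b -> is_derive (fun t => f t + g t) x (a + b).
Proof. apply (is_derive_plus f g x a b). Qed.

Lemma is_derive_Rminus (f g : R -> R) x a b :
  is_derive f x a -> is_derive g x b -> is_derive (fun t => f t - g t) x (a - b).
Proof. apply (is_derive_minus f g x a b). Qed.

Lemma is_derive_Rmult (f g : R -> R) x a b :
  is_derive f x a -> is_derive g x b -> is_derive (fun t => f t * g t) x (a * g x + f x * b).
Proof. intros. apply (is_derive_mult f g x a b); auto. intros; apply Rmult_comm. Qed.

Lemma is_derive_Rcomp (f g : R -> R) x a b :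
  is_derive f (g x) a -> is_derive g x b -> is_derive (fun t => f (g t)) x (b * a).
Proof. apply (is_derive_comp f g x a b). Qed.

Lemma is_derive_Rconst (c t : R) : is_derive (fun _ => c) t 0.
Proof. apply (is_derive_const c t). Qed.

Lemma is_derive_eq (f : R -> R) x l l' : is_derive f x l -> l = l' -> is_derive f x l'.
Proof. intros; subst; auto. Qed.

(* Coquelicot states derivatives at type [AbsRing.sort R_AbsRing], where [ring]
   and [field] do not apply; [req] retypes the goal equation at [R]. *)
Ltac req := match goal with |- @eq _ ?a ?b => change (@eq R a b) end.

(** Were [h''(0) > 0], the derivative [h'] would be strictly increasing
    through [0], and the mean value theorem on the side where [h'] has the sign
    of [h'(0)] would produce a value of [h] above [h(0)]. *)
Lemma second_derivative_nonpos_at_max (h h' : R -> R) (D dl : R) :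
  0 < dl ->
  (forall t, Rabs t < dl -> is_derive h t (h' t)) -> is_derive h' 0 D ->
  (forall t, Rabs t < dl -> h t <= h 0) -> D <= 0.
Proof.
  intros Hdl Hh Hh' Hmax. apply Rnot_lt_le. intro HD.
  destruct (proj1 (is_derive_Reals h' 0 D) Hh' (D / 2) ltac:(lra)) as [d0 Hd0].
  set (t0 := Rmin dl d0 / 2).
  assert (Ht0 : 0 < t0 < dl /\ t0 < d0).
  { unfold t0. pose proof (Rmin_l dl d0); pose proof (Rmin_r dl d0).
    pose proof (Rmin_pos dl d0 Hdl (cond_pos d0)). lra. }
  assert (Hslope : forall c, c <> 0 -> Rabs c < d0 -> D / 2 < (h' c - h' 0) / c).
  { intros c Hc Hc'. specialize (Hd0 c Hc Hc'). rewrite Rplus_0_l in Hd0.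
    apply Rabs_lt_between in Hd0. lra. }
  assert (Hh_R : forall t, Rabs t < dl -> derivable_pt_lim h t (h' t))
    by (intros t Ht; apply is_derive_Reals, Hh, Ht).
  destruct (Rle_or_lt 0 (h' 0)) as [Hp|Hn].
  - destruct (MVT_cor2 h h' 0 t0 ltac:(lra)) as (c & Hc & Hc2).
    { intros c Hc. apply Hh_R. rewrite Rabs_pos_eq; lra. }
    specialize (Hslope c ltac:(lra) ltac:(rewrite Rabs_pos_eq; lra)).
    assert (Hq : (h' c - h' 0) / c * c = h' c - h' 0) by (field; lra).
    assert (h' c > 0) by nra.
    specialize (Hmax t0 ltac:(rewrite Rabs_pos_eq; lra)). nra.
  - destruct (MVT_cor2 h h' (- t0) 0 ltac:(lra)) as (c & Hc & Hc2).
    { intros c Hc. apply Hh_R. rewrite Rabs_left1; lra. }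
    specialize (Hslope c ltac:(lra) ltac:(rewrite Rabs_left; lra)).
    assert (Hq : (h' c - h' 0) / c * c = h' c - h' 0) by (field; lra).
    assert (h' c < 0) by nra.
    specialize (Hmax (- t0) ltac:(rewrite Rabs_Ropp, Rabs_pos_eq; lra)). nra.
Qed.

(** A pointwise notion of [Delta f (x) = L] that only involves [f] on the three
    coordinate lines through [x]. *)
Definition has_laplacian (f : pt -> R) (x : pt) (L : R) : Prop :=
  exists dl, 0 < dl /\ exists (f1 : nat -> R -> R) (f2 : nat -> R),
    (forall i t, (i < 3)%nat -> Rabs t < dl -> is_derive (fun t => f (shift i t x)) t (f1 i t)) /\
    (forall i, (i < 3)%nat -> is_derive (f1 i) 0 (f2 i)) /\
    f2 0%nat + f2 1%nat + f2 2%nat = L.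

Lemma has_laplacian_le_at_max (u v : pt -> R) x Lu Lv :
  has_laplacian u x Lu -> has_laplacian v x Lv ->
  (exists d, 0 < d /\ forall i t, (i < 3)%nat -> Rabs t < d ->
     u (shift i t x) - v (shift i t x) <= u x - v x) ->
  Lu <= Lv.
Proof.
  intros (du & Hdu & u1 & u2 & Hu1 & Hu2 & <-) (dv & Hdv & v1 & v2 & Hv1 & Hv2 & <-)
         (dm & Hdm & Hmax).
  set (dl := Rmin dm (Rmin du dv)).
  assert (Hdl : 0 < dl /\ dl <= dm /\ dl <= du /\ dl <= dv).
  { unfold dl. pose proof (Rmin_l dm (Rmin du dv)); pose proof (Rmin_r dm (Rmin du dv)).
    pose proof (Rmin_l du dv); pose proof (Rmin_r du dv).
    pose proof (Rmin_pos dm (Rmin du dv) Hdm (Rmin_pos du dv Hdu Hdv)). lra. }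
  assert (Hi : forall i, (i < 3)%nat -> u2 i - v2 i <= 0).
  { intros i Hi.
    apply (second_derivative_nonpos_at_max (fun t => u (shift i t x) - v (shift i t x))
             (fun t => u1 i t - v1 i t) _ dl); [lra | | |].
    - intros t Ht. apply is_derive_Rminus; [apply Hu1 | apply Hv1]; auto; lra.
    - apply is_derive_Rminus; auto.
    - intros t Ht. rewrite !shift_0. apply Hmax; auto; lra. }
  pose proof (Hi 0%nat ltac:(lia)); pose proof (Hi 1%nat ltac:(lia));
  pose proof (Hi 2%nat ltac:(lia)). lra.
Qed.

Lemma has_laplacian_const C x : has_laplacian (fun _ => C) x 0.
Proof.
  exists 1. split; [lra|]. exists (fun _ _ => 0), (fun _ => 0).
  split; [|split]; [intros; apply is_derive_Rconst .. | lra].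
Qed.

Lemma has_laplacian_plus (f g : pt -> R) x Lf Lg :
  has_laplacian f x Lf -> has_laplacian g x Lg ->
  has_laplacian (fun y => f y + g y) x (Lf + Lg).
Proof.
  intros (df & Hdf & f1 & f2 & Hf1 & Hf2 & <-) (dg & Hdg & g1 & g2 & Hg1 & Hg2 & <-).
  exists (Rmin df dg). split; [apply Rmin_pos; auto|].
  exists (fun i t => f1 i t + g1 i t), (fun i => f2 i + g2 i). split; [|split].
  - intros i t Hi Ht. pose proof (Rmin_l df dg); pose proof (Rmin_r df dg).
    apply is_derive_Rplus; [apply Hf1 | apply Hg1]; auto; lra.
  - intros i Hi. apply is_derive_Rplus; auto.
  - ring.
Qed.

Lemma has_laplacian_sum {A} (l : list A) (g : A -> pt -> R) (L : A -> R) x :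
  (forall a, In a l -> has_laplacian (g a) x (L a)) ->
  has_laplacian (fun y => lsum (fun a => g a y) l) x (lsum L l).
Proof.
  induction l as [|a l IH]; simpl; intros H.
  - apply has_laplacian_const.
  - apply has_laplacian_plus; auto.
Qed.

Lemma C2_on_has_laplacian (U : pt -> Prop) (phi : pt -> R) x :
  C2_on U phi ->
  (exists d, 0 < d /\ forall i t, Rabs t < d -> U (shift i t x)) ->
  has_laplacian phi x (laplacian phi x).
Proof.
  intros HC (d & Hd & HU). exists d. split; auto.
  exists (fun i t => pd i phi (shift i t x)), (fun i => pd i (pd i phi) x). split; [|split].
  - intros i t Hi Ht. destruct (proj2 (HC _ (HU i t Ht)) i i Hi Hi) as [Hder _].
    apply Derive_correct in Hder.
    apply (is_derive_ext (fun v : R => phi (shift i (v - t) (shift i t x)))).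
    { intros v. rewrite shift_shift, Rplus_minus. reflexivity. }
    eapply is_derive_eq.
    + apply (is_derive_Rcomp (fun u => phi (shift i u (shift i t x))) (fun v => v - t)).
      * replace (t - t) with 0 by ring. exact Hder.
      * auto_derive; auto.
    + req. unfold pd. apply Rmult_1_l.
  - intros i Hi.
    assert (Ux : U x) by (rewrite <- (shift_0 0 x); apply HU; rewrite Rabs_R0; lra).
    destruct (proj2 (HC x Ux) i i Hi Hi) as [_ [Hder _]].
    apply Derive_correct in Hder. exact Hder.
  - reflexivity.
Qed.

Definition radial_laplacian (F1 F2 : R -> R) (rho : R) : R := F2 rho + 2 * F1 rho / rho.

Lemma pnorm_shift_ge y i t : pnorm y - Rabs t <= pnorm (shift i t y).
Proof.
  rewrite <- !pdist_origin. pose proof (pdist_shift i t y origin) as H.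
  apply Rabs_le_between in H. lra.
Qed.

Lemma pnorm_shift_derive y i t :
  0 < pnorm (shift i t y) ->
  is_derive (fun t => pnorm (shift i t y)) t ((coord i y + t) / pnorm (shift i t y)).
Proof.
  intros Hpos. apply (is_derive_ext (fun t => sqrt (pnorm y ^ 2 + 2 * t * coord i y + t ^ 2))).
  { intros u. rewrite pnorm_shift. reflexivity. }
  rewrite pnorm_shift in *.
  assert (HQ : 0 < pnorm y ^ 2 + 2 * t * coord i y + t ^ 2).
  { apply Rnot_le_lt. intro Hle. rewrite sqrt_neg_0 in Hpos by exact Hle. lra. }
  assert (HD : is_derive (fun t => pnorm y ^ 2 + 2 * t * coord i y + t ^ 2) t
                 (2 * coord i y + 2 * t)) by (auto_derive; [auto | ring]).
  eapply is_derive_eq; [apply is_derive_sqrt; [exact HD | exact HQ] |].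
  req. cbv beta. field. lra.
Qed.

Section Radial.
Variables (F F1 F2 : R -> R) (lo : R).
Hypothesis lo_ge0 : 0 <= lo.
Hypothesis F_derivs : forall rho, lo < rho -> is_derive F rho (F1 rho) /\ is_derive F1 rho (F2 rho).

Definition radial_axis_slope (y : pt) (i : nat) (t : R) : R :=
  F1 (pnorm (shift i t y)) * ((coord i y + t) / pnorm (shift i t y)).

Lemma radial_axis_derivs y i :
  lo < pnorm y ->
  (forall t, Rabs t < pnorm y - lo ->
     is_derive (fun t => F (pnorm (shift i t y))) t (radial_axis_slope y i t)) /\
  is_derive (radial_axis_slope y i) 0
    (F2 (pnorm y) * (coord i y / pnorm y) ^ 2 +
     F1 (pnorm y) * (pnorm y ^ 2 - coord i y ^ 2) / pnorm y ^ 3).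
Proof.
  intros Hy.
  assert (Hlo : forall t, Rabs t < pnorm y - lo -> lo < pnorm (shift i t y))
    by (intros t Ht; pose proof (pnorm_shift_ge y i t); lra).
  split.
  - intros t Ht. specialize (Hlo t Ht).
    eapply is_derive_eq.
    + apply (is_derive_Rcomp F (fun t => pnorm (shift i t y))).
      * apply F_derivs, Hlo.
      * apply pnorm_shift_derive. lra.
    + unfold radial_axis_slope. req. ring.
  - specialize (Hlo 0 ltac:(rewrite Rabs_R0; lra)). rewrite shift_0 in Hlo.
    assert (Hd : is_derive (fun t => pnorm (shift i t y)) 0 (coord i y / pnorm y)).
    { eapply is_derive_eq; [apply pnorm_shift_derive|]; rewrite shift_0; [lra | req; field; lra]. }
    unfold radial_axis_slope. eapply is_derive_eq.
    + apply is_derive_Rmult.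
      * apply (is_derive_Rcomp F1 (fun t => pnorm (shift i t y))); [|exact Hd].
        rewrite shift_0. apply F_derivs, Hlo.
      * apply (is_derive_Rmult (fun t => coord i y + t) (fun t => / pnorm (shift i t y))).
        -- auto_derive; auto.
        -- apply (is_derive_inv (fun t => pnorm (shift i t y))); [exact Hd|].
           rewrite shift_0. lra.
    + req. rewrite !shift_0. field. lra.
Qed.

Lemma radial_has_laplacian c x :
  lo < pdist x c ->
  has_laplacian (fun y => F (pdist y c)) x (radial_laplacian F1 F2 (pdist x c)).
Proof.
  unfold pdist. set (y := psub x c). intros Hy.
  exists (pnorm y - lo). split; [lra|].
  exists (radial_axis_slope y), (fun i => F2 (pnorm y) * (coord i y / pnorm y) ^ 2 +
            F1 (pnorm y) * (pnorm y ^ 2 - coord i y ^ 2) / pnorm y ^ 3).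
  split; [|split].
  - intros i t _ Ht. apply (is_derive_ext (fun t => F (pnorm (shift i t y)))).
    { intros u. rewrite psub_shift. reflexivity. }
    apply radial_axis_derivs; auto.
  - intros i _. apply radial_axis_derivs, Hy.
  - unfold radial_laplacian. cbv beta. pose proof (pnorm_sqr y) as E.
    set (rho := pnorm y) in *.
    set (c0 := coord 0 y) in *; set (c1 := coord 1 y) in *; set (c2 := coord 2 y) in *.
    transitivity (F2 rho * ((c0 ^ 2 + c1 ^ 2 + c2 ^ 2) / rho ^ 2) +
                  F1 rho * (3 * rho ^ 2 - (c0 ^ 2 + c1 ^ 2 + c2 ^ 2)) / rho ^ 3);
      [field | rewrite <- E; field]; lra.
Qed.

End Radial.

Lemma continuous_box_continuous (f : pt -> R) x : continuous f x -> box_continuous f x.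
Proof.
  intros Hc e He. destruct (Hc (fun z => ball (f x) e z)) as [d Hd].
  { exists (mkposreal e He). intros; auto. }
  exists (d / 2). split; [pose proof (cond_pos d); lra|].
  intros y Hy. apply Hd.
  assert (HR : forall a b : R, Rabs (b - a) < d -> ball a d b) by (intros a b H; exact H).
  pose proof (cond_pos d).
  destruct x as [[a b] c], y as [[a' b'] c']; destruct Hy as (H0 & H1 & H2); simpl in *.
  hnf; split; [hnf; split|]; apply HR; simpl; lra.
Qed.

Lemma continuous_R_eps (f : R -> R) x : continuous f x ->
  forall e, 0 < e -> exists d, 0 < d /\ forall y, Rabs (y - x) < d -> Rabs (f y - f x) < e.
Proof.
  intros Hc e He. destruct (Hc (fun z => ball (f x) e z)) as [d Hd].
  { exists (mkposreal e He). intros; auto. }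
  exists d. split; [apply cond_pos|]. intros y Hy. apply Hd, Hy.
Qed.

Lemma box_continuous_const C x : box_continuous (fun _ => C) x.
Proof. intros e He. exists 1. split; [lra|]. intros. rewrite Rminus_diag, Rabs_R0. auto. Qed.

Lemma box_continuous_plus (f g : pt -> R) x :
  box_continuous f x -> box_continuous g x -> box_continuous (fun y => f y + g y) x.
Proof.
  intros Hf Hg e He.
  destruct (Hf (e / 2) ltac:(lra)) as (d1 & Hd1 & H1).
  destruct (Hg (e / 2) ltac:(lra)) as (d2 & Hd2 & H2).
  exists (Rmin d1 d2). split; [apply Rmin_pos; auto|]. intros y Hy.
  specialize (H1 y (inbox_le _ _ _ _ (Rmin_l d1 d2) Hy)).
  specialize (H2 y (inbox_le _ _ _ _ (Rmin_r d1 d2) Hy)).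
  replace (f y + g y - (f x + g x)) with ((f y - f x) + (g y - g x)) by ring.
  eapply Rle_lt_trans; [apply Rabs_triang | lra].
Qed.

Lemma box_continuous_sum {A} (l : list A) (g : A -> pt -> R) x :
  (forall a, In a l -> box_continuous (g a) x) ->
  box_continuous (fun y => lsum (fun a => g a y) l) x.
Proof.
  induction l as [|a l IH]; simpl; intros H.
  - apply box_continuous_const.
  - apply box_continuous_plus; auto.
Qed.

Lemma radial_box_continuous (F : R -> R) c x :
  continuous F (pdist x c) -> box_continuous (fun y => F (pdist y c)) x.
Proof.
  intros HF e He. destruct (continuous_R_eps F _ HF e He) as (d & Hd & H).
  exists (d / 4). split; [lra|]. intros y Hy. apply H.
  pose proof (pdist_lipschitz x y c). apply pdist_le_inbox in Hy. lra.
Qed.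

Definition vanishes_at_infinity (F : R -> R) : Prop :=
  forall e, 0 < e -> exists M, forall rho, M < rho -> Rabs (F rho) < e.

Lemma radial_sum_small_at_infinity {A} (F : R -> R) (l : list A) (c : A -> pt) :
  vanishes_at_infinity F ->
  forall e, 0 < e -> exists M, forall y, M < pnorm y ->
    Rabs (lsum (fun a => F (pdist y (c a))) l) < e.
Proof.
  intros HF. induction l as [|a l IH]; intros e He; simpl.
  - exists 0. intros. rewrite Rabs_R0. auto.
  - destruct (HF (e / 2) ltac:(lra)) as (M1 & H1).
    destruct (IH (e / 2) ltac:(lra)) as (M2 & H2).
    exists (Rmax (M1 + pnorm (c a)) M2). intros y Hy.
    pose proof (Rmax_l (M1 + pnorm (c a)) M2); pose proof (Rmax_r (M1 + pnorm (c a)) M2).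
    pose proof (pnorm_le_pdist y (c a)).
    specialize (H1 (pdist y (c a)) ltac:(lra)). specialize (H2 y ltac:(lra)).
    eapply Rle_lt_trans; [apply Rabs_triang | lra].
Qed.

(** * The comparison principle *)

Lemma comparison_principle K Rs s (u v Lu Lv : pt -> R) :
  (forall x, A_closure K Rs s x -> box_continuous u x /\ box_continuous v x) ->
  (forall x, bdA K Rs s x -> u x <= v x) ->
  (forall e, 0 < e -> exists M, forall x, A_closure K Rs s x -> M < pnorm x -> u x - v x < e) ->
  (forall x, A_set K Rs s x -> has_laplacian u x (Lu x) /\ has_laplacian v x (Lv x)) ->
  (forall x, A_set K Rs s x -> v x < u x -> Lu x <= Lv x -> False) ->
  forall x, A_set K Rs s x -> u x <= v x.
Proof.
  intros Hcont Hbd Hinf Hlap Hcmp x Hx.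
  cut (u x - v x <= 0); [lra|].
  apply (exterior_max_principle K Rs s (fun y => u y - v y)); auto.
  - intros y Hy e He. destruct (Hcont y Hy) as [Hu Hv].
    destruct (box_continuous_plus u (fun y => - v y) y Hu) with (e := e) as (d & Hd & H); auto.
    { intros e' He'. destruct (Hv e' He') as (d & Hd & H). exists d. split; auto.
      intros z Hz. specialize (H z Hz). rewrite <- Rabs_Ropp. replace (- (- v z - - v y))
        with (v z - v y) by ring. exact H. }
    exists d. split; auto. intros z _ Hz. specialize (H z Hz). apply Rabs_lt_between in H. lra.
  - intros y Hy. specialize (Hbd y Hy). lra.
  - intros x0 Hx0 Hpos Hmax. apply (Hcmp x0 Hx0); [lra|].
    destruct (Hlap x0 Hx0) as [Hu Hv]. apply (has_laplacian_le_at_max u v x0); auto.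
    destruct (A_set_shift_closure K Rs s x0 Hx0) as (d & Hd & Hcl).
    exists d. split; auto.
Qed.

(** * The radial profiles *)

Definition tf_coeff : R := 4 * PI * Rpower c_TF (- (3 / 2)).

Lemma c_S_pos : 0 < c_S.
Proof. unfold c_S. pose proof PI_RGT_0. apply Rmult_lt_0_compat; [lra | apply pow_lt; lra]. Qed.

Lemma tf_coeff_pos : 0 < tf_coeff.
Proof. unfold tf_coeff. pose proof PI_RGT_0. apply Rmult_lt_0_compat; [lra | apply exp_pos]. Qed.

Lemma Rpower_c_TF : Rpower c_TF (- (3 / 2)) = 2 * sqrt 2 / (3 * PI ^ 2).
Proof.
  pose proof PI_RGT_0.
  assert (HX : 0 < 3 * PI ^ 2) by (apply Rmult_lt_0_compat; [lra | apply pow_lt; lra]).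
  unfold c_TF. rewrite <- Rpower_mult_distr; [| lra | apply exp_pos].
  rewrite Rpower_mult. replace (2 / 3 * - (3 / 2)) with (- (1)) by field.
  rewrite (Rpower_Ropp (3 * PI ^ 2) 1), (Rpower_1 (3 * PI ^ 2)) by auto.
  replace (Rpower (/ 2) (- (3 / 2))) with (Rpower 2 (1 + / 2)).
  2:{ unfold Rpower. f_equal. rewrite ln_Rinv by lra. field. }
  rewrite Rpower_plus, Rpower_1, Rpower_sqrt by lra. field. lra.
Qed.

Lemma sqrt_c_S : sqrt c_S = 9 * PI * sqrt 2 / 4.
Proof.
  pose proof PI_RGT_0. pose proof (sqrt_lt_R0 2 ltac:(lra)).
  replace c_S with ((9 * PI * sqrt 2 / 4) ^ 2).
  - apply sqrt_pow2. apply Rmult_le_pos; [apply Rmult_le_pos|]; lra.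
  - unfold c_S. replace ((9 * PI * sqrt 2 / 4) ^ 2) with (81 * PI ^ 2 * (sqrt 2 * sqrt 2) / 16)
      by field.
    rewrite sqrt_sqrt by lra. field.
Qed.

(** This is why [c_S rho^-4] solves [Delta w = tf_coeff w^(3/2)] exactly. *)
Lemma tf_coeff_sqrt_c_S : tf_coeff * sqrt c_S = 12.
Proof.
  unfold tf_coeff. rewrite Rpower_c_TF, sqrt_c_S. pose proof PI_RGT_0.
  replace (4 * PI * (2 * sqrt 2 / (3 * PI ^ 2)) * (9 * PI * sqrt 2 / 4))
    with (6 * (sqrt 2 * sqrt 2)) by (field; lra).
  rewrite sqrt_sqrt by lra. ring.
Qed.

Lemma xi_root : xi ^ 2 + 7 * xi - 6 = 0.
Proof.
  unfold xi.
  replace (((-7 + sqrt 73) / 2) ^ 2 + 7 * ((-7 + sqrt 73) / 2) - 6)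
    with ((sqrt 73 * sqrt 73 - 73) / 4) by field.
  rewrite sqrt_sqrt by lra. field.
Qed.

Lemma xi_bounds : 0 < xi /\ xi <= 6 / 7.
Proof.
  unfold xi. split.
  - assert (7 < sqrt 73) by (rewrite <- (sqrt_pow2 7) by lra; apply sqrt_lt_1_alt; lra). lra.
  - assert (sqrt 73 <= 61 / 7) by (rewrite <- (sqrt_pow2 (61 / 7)) by lra; apply sqrt_le_1_alt; lra).
    lra.
Qed.

(** [ratio_pow r rho = (r / rho) ^ xi], written [exp (xi * (ln r + - ln rho))]
    because this is the shape [auto_derive] produces, so that [field] can match
    the derivatives below. *)
Definition ratio_pow (r rho : R) : R := exp (xi * (ln r + - ln rho)).

Lemma exp_le_exp x y : x <= y -> exp x <= exp y.
Proof. intros [H|<-]; [left; apply exp_increasing, H | lra]. Qed.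

Definition bracket (b r rho : R) : R := 1 + b * ratio_pow r rho.

Lemma Rpower_ratio_pow r rho : 0 < r -> 0 < rho -> Rpower (r / rho) xi = ratio_pow r rho.
Proof. intros. unfold Rpower, ratio_pow. rewrite ln_div by auto. reflexivity. Qed.

Lemma ratio_pow_bounds r rho :
  0 < r -> r <= rho -> 0 < ratio_pow r rho <= 1 /\ (r / rho) ^ 2 <= ratio_pow r rho.
Proof.
  intros Hr Hrho. pose proof xi_bounds. unfold ratio_pow.
  assert (Hl : ln r - ln rho <= 0).
  { destruct (Req_dec r rho) as [<-|Hne]; [lra|].
    assert (ln r < ln rho) by (apply ln_increasing; lra). lra. }
  split; [split|].
  - apply exp_pos.
  - rewrite <- exp_0. apply exp_le_exp. nra.
  - replace ((r / rho) ^ 2) with (exp (2 * (ln r - ln rho))).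
    + apply exp_le_exp. nra.
    + replace (ln r - ln rho) with (ln (r / rho)) by (rewrite ln_div by lra; ring).
      replace (2 * ln (r / rho)) with (ln (r / rho) + ln (r / rho)) by ring.
      rewrite exp_plus, exp_ln by (apply Rdiv_lt_0_compat; lra). ring.
Qed.

Lemma ratio_pow_lt_1 r rho : 0 < r -> r < rho -> ratio_pow r rho < 1.
Proof.
  intros Hr H. unfold ratio_pow. rewrite <- exp_0. apply exp_increasing. pose proof xi_bounds.
  assert (ln r < ln rho) by (apply ln_increasing; lra). nra.
Qed.

Lemma bracket_ge b r rho : -1 < b -> 0 < r -> r <= rho -> Rmin 1 (1 + b) <= bracket b r rho.
Proof.
  intros Hb Hr Hrho. destruct (ratio_pow_bounds r rho Hr Hrho) as [[E1 E2] _]. unfold bracket.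
  destruct (Rle_or_lt 0 b).
  - pose proof (Rmin_l 1 (1 + b)). nra.
  - pose proof (Rmin_r 1 (1 + b)). nra.
Qed.

Lemma bracket_pos b r rho : -1 < b -> 0 < r -> r <= rho -> 0 < bracket b r rho.
Proof.
  intros Hb Hr Hrho. pose proof (bracket_ge b r rho Hb Hr Hrho).
  pose proof (Rmin_pos 1 (1 + b) Rlt_0_1 ltac:(lra)). lra.
Qed.

(** [omega_sub a r |x|] and [omega_sup A r |x|] are the paper's [omega_a^-(x)]
    and [omega_A^+(x)]; primes denote derivatives in [rho = |x|]. *)
Definition omega_sub (b r rho : R) : R := c_S / rho ^ 4 / bracket b r rho ^ 2.
Definition omega_sub' (b r rho : R) : R :=
  c_S * ((2 * xi - 4) * bracket b r rho - 2 * xi) / (rho ^ 5 * bracket b r rho ^ 3).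
Definition omega_sub'' (b r rho : R) : R :=
  c_S * ((-5 * bracket b r rho + 3 * xi * (bracket b r rho - 1)) *
           ((2 * xi - 4) * bracket b r rho - 2 * xi)
         - (2 * xi - 4) * xi * (bracket b r rho - 1) * bracket b r rho)
  / (rho ^ 6 * bracket b r rho ^ 4).

Definition omega_sup (b r rho : R) : R := c_S / rho ^ 4 * bracket b r rho.
Definition omega_sup' (b r rho : R) : R :=
  c_S * ((-4 - xi) * bracket b r rho + xi) / rho ^ 5.
Definition omega_sup'' (b r rho : R) : R :=
  c_S * (-5 * ((-4 - xi) * bracket b r rho + xi) + (4 + xi) * xi * (bracket b r rho - 1))
  / rho ^ 6.

Definition coulomb (c1 c2 rho : R) : R := c1 / rho + c2 / rho ^ 2.
Definition coulomb' (c1 c2 rho : R) : R := - c1 / rho ^ 2 - 2 * c2 / rho ^ 3.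
Definition coulomb'' (c1 c2 rho : R) : R := 2 * c1 / rho ^ 3 + 6 * c2 / rho ^ 4.

Ltac nonzero :=
  repeat match goal with |- _ * _ <> 0 => apply Rmult_integral_contrapositive_currified end;
  try lra; auto.

Lemma omega_sub_derivs b r rho : 0 < r -> 0 < rho -> bracket b r rho <> 0 ->
  is_derive (omega_sub b r) rho (omega_sub' b r rho) /\
  is_derive (omega_sub' b r) rho (omega_sub'' b r rho).
Proof.
  intros Hr Hrho HU. unfold omega_sub, omega_sub', omega_sub'', bracket, ratio_pow in *.
  split; (auto_derive; [repeat split; auto; nonzero | req; field; repeat split; auto; nonzero]).
Qed.

Lemma omega_sup_derivs b r rho : 0 < r -> 0 < rho ->
  is_derive (omega_sup b r) rho (omega_sup' b r rho) /\
  is_derive (omega_sup' b r) rho (omega_sup'' b r rho).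
Proof.
  intros Hr Hrho. unfold omega_sup, omega_sup', omega_sup'', bracket, ratio_pow in *.
  split; (auto_derive; [repeat split; auto; nonzero | req; field; repeat split; auto; nonzero]).
Qed.

Lemma coulomb_derivs c1 c2 rho : 0 < rho ->
  is_derive (coulomb c1 c2) rho (coulomb' c1 c2 rho) /\
  is_derive (coulomb' c1 c2) rho (coulomb'' c1 c2 rho).
Proof.
  intros H. unfold coulomb, coulomb', coulomb''.
  split; (auto_derive; [repeat split; auto; nonzero | req; field; lra]).
Qed.

(** For [w = omega_sub b r] and [u = bracket b r rho],
    [rho^6 u^4 (Delta w - tf_coeff w^(3/2)) / c_S = (u - 1)^2 (36 - 42 xi)]
    thanks to [xi^2 + 7 xi - 6 = 0], and [xi <= 6/7]. *)
Lemma omega_sub_subsolution b r rho : 0 < rho -> 0 < bracket b r rho ->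
  tf_coeff * (omega_sub b r rho * sqrt (omega_sub b r rho))
  <= radial_laplacian (omega_sub' b r) (omega_sub'' b r) rho.
Proof.
  intros Hrho HU. pose proof c_S_pos. pose proof tf_coeff_sqrt_c_S as H12.
  pose proof xi_root as Hxi. pose proof xi_bounds.
  unfold radial_laplacian, omega_sub', omega_sub''.
  set (u := bracket b r rho) in *.
  assert (Hsq : sqrt (omega_sub b r rho) = sqrt c_S / (rho ^ 2 * u)).
  { unfold omega_sub. fold u.
    replace (c_S / rho ^ 4 / u ^ 2) with (c_S * (/ (rho ^ 2 * u)) ^ 2) by (field; lra).
    rewrite sqrt_mult_alt, sqrt_pow2 by (try apply Rlt_le, Rinv_0_lt_compat, Rmult_lt_0_compat;
      try apply pow_lt; lra). field; lra. }
  rewrite Hsq. unfold omega_sub. fold u.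
  replace (tf_coeff * (c_S / rho ^ 4 / u ^ 2 * (sqrt c_S / (rho ^ 2 * u))))
    with (c_S * (12 * u) / (rho ^ 6 * u ^ 4)) by (rewrite <- H12; field; lra).
  match goal with |- _ <= ?rhs => replace rhs with
    (c_S * (12 * u + (u - 1) ^ 2 * (36 - 42 * xi)
            + (xi ^ 2 + 7 * xi - 6) * (u - 1) * (4 * u - 6)) / (rho ^ 6 * u ^ 4))
    by (field; lra) end.
  rewrite Hxi. unfold Rdiv. apply Rmult_le_compat_r.
  - apply Rlt_le, Rinv_0_lt_compat, Rmult_lt_0_compat; apply pow_lt; auto.
  - apply Rmult_le_compat_l; [lra|].
    assert (0 <= (u - 1) ^ 2 * (36 - 42 * xi)) by (apply Rmult_le_pos; [apply pow2_ge_0 | lra]).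
    lra.
Qed.

(** Here [rho^6 (tf_coeff w^(3/2) - Delta w) / c_S = 6 (v - 1)^2 (2 v + 1)]
    with [v = sqrt u]. *)
Lemma omega_sup_supersolution b r rho : 0 < rho -> 0 < bracket b r rho ->
  radial_laplacian (omega_sup' b r) (omega_sup'' b r) rho
  <= tf_coeff * (omega_sup b r rho * sqrt (omega_sup b r rho)).
Proof.
  intros Hrho HU. pose proof c_S_pos. pose proof tf_coeff_sqrt_c_S as H12.
  pose proof xi_root as Hxi.
  unfold radial_laplacian, omega_sup', omega_sup''.
  set (u := bracket b r rho) in *.
  assert (Hsq : sqrt (omega_sup b r rho) = sqrt c_S * sqrt u / rho ^ 2).
  { unfold omega_sup. fold u.
    replace (c_S / rho ^ 4 * u) with (c_S * u * (/ rho ^ 2) ^ 2) by (field; lra).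
    rewrite sqrt_mult_alt by (apply Rmult_le_pos; lra).
    rewrite sqrt_pow2 by (apply Rlt_le, Rinv_0_lt_compat, pow_lt; lra).
    rewrite sqrt_mult_alt by lra. field; lra. }
  rewrite Hsq. unfold omega_sup. fold u.
  replace (tf_coeff * (c_S / rho ^ 4 * u * (sqrt c_S * sqrt u / rho ^ 2)))
    with (c_S * (12 * u * sqrt u) / rho ^ 6) by (rewrite <- H12; field; lra).
  match goal with |- ?lhs <= _ => replace lhs with
    (c_S * (18 * u - 6 + (xi ^ 2 + 7 * xi - 6) * (u - 1)) / rho ^ 6) by (field; lra) end.
  rewrite Hxi. unfold Rdiv. apply Rmult_le_compat_r; [apply Rlt_le, Rinv_0_lt_compat, pow_lt; auto|].
  apply Rmult_le_compat_l; [lra|].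
  pose proof (sqrt_sqrt u ltac:(lra)). pose proof (sqrt_pos u). set (v := sqrt u) in *.
  rewrite <- H0. assert (0 <= (v - 1) ^ 2 * (2 * v + 1)) by (apply Rmult_le_pos; [apply pow2_ge_0 | lra]).
  nra.
Qed.

Lemma coulomb_radial_laplacian c1 c2 rho : 0 < rho ->
  radial_laplacian (coulomb' c1 c2) (coulomb'' c1 c2) rho = 2 * c2 / rho ^ 4.
Proof. intros. unfold radial_laplacian, coulomb'', coulomb'. field. lra. Qed.

Lemma omega_sub_pos b r rho : 0 < rho -> 0 < bracket b r rho -> 0 < omega_sub b r rho.
Proof.
  intros. pose proof c_S_pos. unfold omega_sub.
  apply Rdiv_lt_0_compat; [apply Rdiv_lt_0_compat|]; auto; apply pow_lt; auto.
Qed.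

Lemma omega_sup_ge0 b r rho : 0 < rho -> 0 < bracket b r rho -> 0 <= omega_sup b r rho.
Proof.
  intros. pose proof c_S_pos. unfold omega_sup.
  apply Rmult_le_pos; [apply Rlt_le, Rdiv_lt_0_compat; auto; apply pow_lt; auto | lra].
Qed.

Lemma omega_sub_le_at_r b r rho : -1 < b -> 0 < r -> r <= rho ->
  omega_sub b r rho <= c_S / r ^ 4 / (1 + b) ^ 2.
Proof.
  intros Hb Hr Hrho. destruct (ratio_pow_bounds r rho Hr Hrho) as [[E1 E2] E3].
  pose proof (bracket_pos b r rho Hb Hr Hrho) as HU.
  assert (Hr2 : r ^ 2 <= rho ^ 2) by (apply pow_incr; lra).
  assert (H2 : r ^ 2 * (1 + b) <= rho ^ 2 * bracket b r rho).
  { unfold bracket in *. destruct (Rle_or_lt 0 b).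
    - assert (r ^ 2 <= rho ^ 2 * ratio_pow r rho).
      { replace (r ^ 2) with (rho ^ 2 * (r / rho) ^ 2) by (field; lra).
        apply Rmult_le_compat_l; auto. apply pow2_ge_0. }
      nra.
    - assert (1 + b <= 1 + b * ratio_pow r rho) by nra.
      apply Rle_trans with (rho ^ 2 * (1 + b)); [apply Rmult_le_compat_r; lra|].
      apply Rmult_le_compat_l; [apply pow2_ge_0 | lra]. }
  pose proof c_S_pos. unfold omega_sub.
  replace (c_S / rho ^ 4 / bracket b r rho ^ 2) with (c_S / (rho ^ 2 * bracket b r rho) ^ 2)
    by (field; split; lra).
  replace (c_S / r ^ 4 / (1 + b) ^ 2) with (c_S / (r ^ 2 * (1 + b)) ^ 2) by (field; lra).
  unfold Rdiv. apply Rmult_le_compat_l; [lra|]. apply Rinv_le_contravar.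
  - apply pow_lt, Rmult_lt_0_compat; [apply pow_lt|]; lra.
  - apply pow_incr. split; auto. apply Rmult_le_pos; [apply pow2_ge_0 | lra].
Qed.

Lemma omega_sup_affine a b r rho :
  omega_sup b r rho = omega_sup a r rho + (b - a) * (c_S / rho ^ 4 * ratio_pow r rho).
Proof. unfold omega_sup, bracket. ring. Qed.

Lemma omega_sub_continuous_in_b a r rho : 0 < rho -> bracket a r rho <> 0 ->
  continuous (fun b => omega_sub b r rho) a.
Proof.
  intros Hrho HU. apply (@ex_derive_continuous R_AbsRing R_NormedModule).
  unfold omega_sub, bracket in *. auto_derive. repeat split; auto; nonzero.
Qed.

Lemma bracket_continuous_in_rho b r : 0 < r -> continuous (bracket b r) r.
Proof.
  intros Hr. apply (@ex_derive_continuous R_AbsRing R_NormedModule).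
  unfold bracket, ratio_pow. auto_derive. auto.
Qed.

Lemma ratio_pow_diag r : 0 < r -> ratio_pow r r = 1.
Proof. intros. unfold ratio_pow. rewrite Rplus_opp_r, Rmult_0_r. apply exp_0. Qed.

Lemma vanishes_of_bound (F : R -> R) (C R0 : R) : 0 <= C ->
  (forall rho, R0 < rho -> 1 <= rho -> Rabs (F rho) <= C / rho) -> vanishes_at_infinity F.
Proof.
  intros HC HF e He. exists (Rmax (Rmax 1 R0) (C / e)). intros rho Hrho.
  pose proof (Rmax_l (Rmax 1 R0) (C / e)); pose proof (Rmax_r (Rmax 1 R0) (C / e)).
  pose proof (Rmax_l 1 R0); pose proof (Rmax_r 1 R0).
  eapply Rle_lt_trans; [apply HF; lra|].
  apply Rmult_lt_reg_r with rho; [lra|]. unfold Rdiv. rewrite Rmult_assoc, Rinv_l, Rmult_1_r by lra.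
  assert (Hlt : C / e < rho) by lra. apply Rmult_lt_compat_l with (r := e) in Hlt; auto.
  replace (e * (C / e)) with C in Hlt by (field; lra). lra.
Qed.

Lemma le_pow4 rho : 1 <= rho -> rho <= rho ^ 4.
Proof. intros. assert (1 <= rho ^ 3) by (apply pow_R1_Rle; lra). simpl in *. nra. Qed.

Lemma omega_sub_vanishes b r : -1 < b -> 0 < r -> vanishes_at_infinity (omega_sub b r).
Proof.
  intros Hb Hr. set (m := Rmin 1 (1 + b)).
  assert (Hm : 0 < m) by (apply Rmin_pos; lra). pose proof c_S_pos.
  apply (vanishes_of_bound _ (c_S / m ^ 2) r); [apply Rlt_le, Rdiv_lt_0_compat; auto; apply pow_lt; auto|].
  intros rho H1 H2. pose proof (bracket_ge b r rho Hb Hr ltac:(lra)) as HU. fold m in HU.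
  rewrite Rabs_pos_eq by (apply Rlt_le, omega_sub_pos; lra). unfold omega_sub.
  replace (c_S / rho ^ 4 / bracket b r rho ^ 2) with (c_S * / (rho ^ 4 * bracket b r rho ^ 2))
    by (field; lra).
  replace (c_S / m ^ 2 / rho) with (c_S * / (rho * m ^ 2)) by (field; lra).
  apply Rmult_le_compat_l; [lra|]. apply Rinv_le_contravar; [apply Rmult_lt_0_compat; [lra | apply pow_lt; lra]|].
  pose proof (le_pow4 rho H2). assert (m ^ 2 <= bracket b r rho ^ 2) by (apply pow_incr; lra).
  apply Rmult_le_compat; try lra. apply pow2_ge_0.
Qed.

Lemma omega_sup_vanishes b r : -1 < b -> 0 < r -> vanishes_at_infinity (omega_sup b r).
Proof.
  intros Hb Hr. pose proof c_S_pos.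
  apply (vanishes_of_bound _ (c_S * (1 + Rabs b)) r);
    [pose proof (Rabs_pos b); apply Rmult_le_pos; lra|].
  intros rho H1 H2. pose proof (bracket_pos b r rho Hb Hr ltac:(lra)).
  destruct (ratio_pow_bounds r rho Hr ltac:(lra)) as [[E1 E2] _].
  assert (bracket b r rho <= 1 + Rabs b).
  { unfold bracket. assert (b * ratio_pow r rho <= Rabs b).
    { eapply Rle_trans; [apply Rle_abs|].
      rewrite Rabs_mult, (Rabs_pos_eq (ratio_pow r rho)) by lra. pose proof (Rabs_pos b). nra. }
    lra. }
  rewrite Rabs_pos_eq by (apply omega_sup_ge0; lra). unfold omega_sup.
  replace (c_S / rho ^ 4 * bracket b r rho) with (c_S * bracket b r rho * / rho ^ 4) by (field; lra).
  replace (c_S * (1 + Rabs b) / rho) with (c_S * (1 + Rabs b) * / rho) by (field; lra).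
  apply Rmult_le_compat; [apply Rmult_le_pos; lra | apply Rlt_le, Rinv_0_lt_compat, pow_lt; lra
                         | apply Rmult_le_compat_l; lra |].
  apply Rinv_le_contravar; [lra | apply le_pow4; auto].
Qed.

Lemma coulomb_vanishes c1 c2 : vanishes_at_infinity (coulomb c1 c2).
Proof.
  apply (vanishes_of_bound _ (Rabs c1 + Rabs c2) 0);
    [pose proof (Rabs_pos c1); pose proof (Rabs_pos c2); lra|].
  intros rho H1 H2. unfold coulomb. eapply Rle_trans; [apply Rabs_triang|].
  unfold Rdiv. rewrite !Rabs_mult, (Rabs_pos_eq (/ rho)), (Rabs_pos_eq (/ rho ^ 2))
    by (apply Rlt_le, Rinv_0_lt_compat; try apply pow_lt; lra).
  assert (/ rho ^ 2 <= / rho) by (apply Rinv_le_contravar; [lra | simpl; nra]).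
  pose proof (Rabs_pos c1); pose proof (Rabs_pos c2). nra.
Qed.

Lemma Rbar_glb_le_elem (E : Rbar -> Prop) y : E y -> Rbar_le (Rbar_glb E) y.
Proof. intros H. unfold Rbar_glb. destruct (Rbar_ex_glb E) as [l Hl]. apply (proj1 Hl), H. Qed.

Lemma Rbar_lub_ge_elem (E : Rbar -> Prop) y : E y -> Rbar_le y (Rbar_lub E).
Proof. intros H. unfold Rbar_lub. destruct (Rbar_ex_lub E) as [l Hl]. apply (proj1 Hl), H. Qed.

Lemma Rbar_glb_ge_lower (E : Rbar -> Prop) b :
  (forall y, E y -> Rbar_le b y) -> Rbar_le b (Rbar_glb E).
Proof. intros H. unfold Rbar_glb. destruct (Rbar_ex_glb E) as [l Hl]. exact (proj2 Hl b H). Qed.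

Lemma liminf_right_lt (g : R -> Rbar) r a b :
  liminf_right g r = Finite a -> a < b ->
  forall d, 0 < d -> exists s, r < s < r + d /\ Rbar_lt (g s) (Finite b).
Proof.
  intros Ha Hab d Hd. apply NNPP. intros C.
  assert (Hinf : Rbar_le (Finite b) (Rbar_glb (fun z => exists s, r < s < r + d /\ z = g s))).
  { apply Rbar_glb_ge_lower. intros y (s & Hs & ->). apply Rbar_not_lt_le. intro. apply C.
    exists s; auto. }
  assert (Hsup : Rbar_le (Rbar_glb (fun z => exists s, r < s < r + d /\ z = g s))
                         (liminf_right g r)) by (apply Rbar_lub_ge_elem; exists d; auto).
  rewrite Ha in Hsup. pose proof (Rbar_le_trans _ _ _ Hinf Hsup). simpl in *. lra.
Qed.

Lemma sup_bd_lt K Rs f s b :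
  Rbar_lt (sup_bd K Rs f s) (Finite b) -> forall w, bdA K Rs s w -> f w < b.
Proof.
  intros H w Hw.
  assert (Rbar_le (Finite (f w)) (sup_bd K Rs f s)) by (apply Rbar_lub_ge_elem; exists w; auto).
  pose proof (Rbar_le_lt_trans _ _ _ H0 H). auto.
Qed.

Lemma inf_bd_gt K Rs f s b :
  Rbar_lt (Finite b) (inf_bd K Rs f s) -> forall w, bdA K Rs s w -> b < f w.
Proof.
  intros H w Hw.
  assert (Rbar_le (inf_bd K Rs f s) (Finite (f w))) by (apply Rbar_glb_le_elem; exists w; auto).
  pose proof (Rbar_lt_le_trans _ _ _ H H0). auto.
Qed.

Lemma pos32_nonpos t : t <= 0 -> pos32 t = 0.
Proof. intros. unfold pos32, pos_part. rewrite Rmax_right by lra. ring. Qed.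

Lemma pos32_pos t : 0 <= t -> pos32 t = t * sqrt t.
Proof. intros. unfold pos32, pos_part. rewrite Rmax_left by lra. ring. Qed.

Lemma pow32_lt s t : 0 <= s -> s < t -> s * sqrt s < t * sqrt t.
Proof.
  intros. assert (sqrt s <= sqrt t) by (apply sqrt_le_1_alt; lra).
  pose proof (sqrt_pos s). assert (0 < sqrt t) by (apply sqrt_lt_R0; lra). nra.
Qed.

Lemma pos32_lt t y : 0 < y -> t < y -> pos32 t < y * sqrt y.
Proof.
  intros Hy Hty. destruct (Rle_or_lt t 0).
  - rewrite pos32_nonpos by auto. apply Rmult_lt_0_compat; auto. apply sqrt_lt_R0, Hy.
  - rewrite pos32_pos by lra. apply pow32_lt; lra.
Qed.

Lemma div_sqr_lt_of_sqrt_lt X p b :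
  0 < X -> 0 < p -> sqrt (X * / p) - 1 < b -> -1 < b /\ X / (1 + b) ^ 2 < p.
Proof.
  intros HX Hp Hb. pose proof (sqrt_pos (X * / p)).
  assert (HXp : 0 < X * / p) by (apply Rmult_lt_0_compat; [|apply Rinv_0_lt_compat]; lra).
  split; [lra|].
  assert (Hlt : X * / p < (1 + b) ^ 2) by (pose proof (sqrt_sqrt (X * / p) ltac:(lra)); nra).
  apply Rmult_lt_reg_r with ((1 + b) ^ 2); [apply pow_lt; lra|].
  replace (X / (1 + b) ^ 2 * (1 + b) ^ 2) with X by (field; lra).
  apply Rmult_lt_compat_r with (r := p) in Hlt; auto.
  replace (X * / p * p) with X in Hlt by (field; lra). lra.
Qed.

Section Thomas_Fermi.
Variables (K : nat) (Rs : nat -> pt) (r mu : R) (phi : pt -> R).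
Hypothesis K_pos : (1 <= K)%nat.
Hypothesis r_pos : 0 < r.
Hypothesis r_le_R0 : le_R0 K Rs r.
Hypothesis mu_ge0 : 0 <= mu.
Hypothesis phi_continuous : forall x, A_set K Rs r x -> continuous phi x.
Hypothesis phi_vanishes : forall eps, 0 < eps -> exists M, forall x, A_set K Rs r x ->
  M < pnorm x -> Rabs (phi x) < eps.
Hypothesis phi_C2 : C2_on (A_set K Rs r) phi.
Hypothesis phi_TF : forall x, A_set K Rs r x ->
  laplacian phi x = 4 * PI * Rpower c_TF (- (3 / 2)) * pos32 (phi x - mu).
Hypothesis phi_boundary_limit : exists L : Rbar, Rbar_lt (Finite mu) L /\
  lim_right_Rbar (fun s => inf_bd K Rs phi s) r L.

Definition potential (F : R -> R) (js : list nat) (C : R) (y : pt) : R :=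
  lsum (fun j => F (pdist y (Rs j))) js + C.

Definition potential_laplacian (F1 F2 : R -> R) (js : list nat) (y : pt) : R :=
  lsum (fun j => radial_laplacian F1 F2 (pdist y (Rs j))) js.

Definition nuclei_list (js : list nat) : Prop := forall j, In j js -> (j < K)%nat.

Definition radial_derivs (F F1 F2 : R -> R) : Prop :=
  forall rho, r < rho -> is_derive F rho (F1 rho) /\ is_derive F1 rho (F2 rho).

Lemma A_closure_A_set s x : r < s -> A_closure K Rs s x -> A_set K Rs r x.
Proof. intros Hs Hx j Hj. specialize (Hx j Hj). lra. Qed.

Lemma potential_box_continuous F F1 F2 js C x :
  nuclei_list js -> radial_derivs F F1 F2 -> A_set K Rs r x ->
  box_continuous (potential F js C) x.
Proof.
  intros Hjs HF Hx. apply box_continuous_plus; [|apply box_continuous_const].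
  apply box_continuous_sum. intros j Hj. apply radial_box_continuous.
  apply (@ex_derive_continuous R_AbsRing R_NormedModule). eexists. exact (proj1 (HF _ (Hx j (Hjs j Hj)))).
Qed.

Lemma potential_has_laplacian F F1 F2 js C x :
  nuclei_list js -> radial_derivs F F1 F2 -> A_set K Rs r x ->
  has_laplacian (potential F js C) x (potential_laplacian F1 F2 js x).
Proof.
  intros Hjs HF Hx. unfold potential_laplacian. rewrite <- Rplus_0_r.
  apply has_laplacian_plus; [|apply has_laplacian_const].
  apply has_laplacian_sum. intros j Hj. apply (radial_has_laplacian F F1 F2 r); [lra | exact HF |].
  apply Hx, Hjs, Hj.
Qed.

Lemma potential_tends_to_C F js C :
  vanishes_at_infinity F ->
  forall e, 0 < e -> exists M, forall y, M < pnorm y -> Rabs (potential F js C y - C) < e.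
Proof.
  intros HF e He. destruct (radial_sum_small_at_infinity F js Rs HF e He) as [M HM].
  exists M. intros y Hy. unfold potential. replace (lsum (fun j => F (pdist y (Rs j))) js + C - C)
    with (lsum (fun j => F (pdist y (Rs j))) js) by ring. auto.
Qed.

Lemma phi_has_laplacian x : A_set K Rs r x -> has_laplacian phi x (laplacian phi x).
Proof.
  intros Hx. apply (C2_on_has_laplacian (A_set K Rs r)); [exact phi_C2|].
  destruct (A_set_margin K Rs r x Hx) as (d & Hd & Hm).
  destruct (A_set_shift_closure K Rs (r + d / 2) x (Hm (r + d / 2) ltac:(lra))) as (d' & Hd' & Hcl).
  exists d'. split; auto. intros i t Ht. apply (A_closure_A_set (r + d / 2) _ ltac:(lra)), Hcl, Ht.
Qed.

Lemma phi_potential_regular F F1 F2 js C s :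
  r < s -> nuclei_list js -> radial_derivs F F1 F2 ->
  (forall x, A_closure K Rs s x -> box_continuous (potential F js C) x /\ box_continuous phi x) /\
  (forall x, A_set K Rs s x ->
     has_laplacian (potential F js C) x (potential_laplacian F1 F2 js x) /\
     has_laplacian phi x (tf_coeff * pos32 (phi x - mu))).
Proof.
  intros Hs Hjs HF. split.
  - intros x Hx. pose proof (A_closure_A_set s x Hs Hx). split.
    + eapply potential_box_continuous; eauto.
    + apply continuous_box_continuous, phi_continuous; auto.
  - intros x Hx. assert (HA : A_set K Rs r x) by (intros j Hj; specialize (Hx j Hj); lra).
    split; [eapply potential_has_laplacian; eauto|].
    unfold tf_coeff. rewrite <- phi_TF by exact HA. apply phi_has_laplacian, HA.
Qed.

Lemma potential_minus_phi_small F js C s :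
  r < s -> vanishes_at_infinity F ->
  forall e, 0 < e -> exists M, forall x, A_closure K Rs s x -> M < pnorm x ->
    Rabs (potential F js C x - C - phi x) < e.
Proof.
  intros Hs HF e He. destruct (potential_tends_to_C F js C HF (e / 2) ltac:(lra)) as [M1 H1].
  destruct (phi_vanishes (e / 2) ltac:(lra)) as [M2 H2].
  exists (Rmax M1 M2). intros x Hx HM.
  pose proof (Rmax_l M1 M2); pose proof (Rmax_r M1 M2).
  specialize (H1 x ltac:(lra)). specialize (H2 x (A_closure_A_set s x Hs Hx) ltac:(lra)).
  apply Rabs_lt_between in H1. apply Rabs_lt_between in H2. apply Rabs_lt_between. lra.
Qed.

Lemma potential_le_phi F F1 F2 js C s :
  r < s -> nuclei_list js -> radial_derivs F F1 F2 -> vanishes_at_infinity F -> C <= 0 ->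
  (forall w, bdA K Rs s w -> potential F js C w <= phi w) ->
  (forall x, A_set K Rs s x -> phi x < potential F js C x ->
     potential_laplacian F1 F2 js x <= tf_coeff * pos32 (phi x - mu) -> False) ->
  forall x, A_set K Rs s x -> potential F js C x <= phi x.
Proof.
  intros Hs Hjs HF HFinf HC Hbd Hint.
  destruct (phi_potential_regular F F1 F2 js C s Hs Hjs HF) as [Hcont Hlap].
  apply (comparison_principle K Rs s _ _ (potential_laplacian F1 F2 js)
           (fun x => tf_coeff * pos32 (phi x - mu))); auto.
  - intros e He. destruct (potential_minus_phi_small F js C s Hs HFinf e He) as [M HM].
    exists M. intros x Hx Hx'. specialize (HM x Hx Hx'). apply Rabs_lt_between in HM. lra.
Qed.

Lemma phi_le_potential F F1 F2 js C s :
  r < s -> nuclei_list js -> radial_derivs F F1 F2 -> vanishes_at_infinity F -> 0 <= C ->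
  (forall w, bdA K Rs s w -> phi w <= potential F js C w) ->
  (forall x, A_set K Rs s x -> potential F js C x < phi x ->
     tf_coeff * pos32 (phi x - mu) <= potential_laplacian F1 F2 js x -> False) ->
  forall x, A_set K Rs s x -> phi x <= potential F js C x.
Proof.
  intros Hs Hjs HF HFinf HC Hbd Hint.
  destruct (phi_potential_regular F F1 F2 js C s Hs Hjs HF) as [Hcont Hlap].
  apply (comparison_principle K Rs s _ _ (fun x => tf_coeff * pos32 (phi x - mu))
           (potential_laplacian F1 F2 js)); auto.
  - intros x Hx. destruct (Hcont x Hx); auto.
  - intros e He. destruct (potential_minus_phi_small F js C s Hs HFinf e He) as [M HM].
    exists M. intros x Hx Hx'. specialize (HM x Hx Hx'). apply Rabs_lt_between in HM. lra.
  - intros x Hx. destruct (Hlap x Hx); auto.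
Qed.

Lemma potential_single F j C y : potential F (j :: nil) C y = F (pdist y (Rs j)) + C.
Proof. unfold potential. simpl. ring. Qed.

Lemma potential_laplacian_single F1 F2 j y :
  potential_laplacian F1 F2 (j :: nil) y = radial_laplacian F1 F2 (pdist y (Rs j)).
Proof. unfold potential_laplacian. simpl. ring. Qed.

Lemma nuclei_list_single j : (j < K)%nat -> nuclei_list (j :: nil).
Proof. intros Hj i [<-|[]]. exact Hj. Qed.

Lemma boundary_gt_mu :
  exists d, 0 < d /\ forall s, r < s < r + d -> forall w, bdA K Rs s w -> mu < phi w.
Proof.
  destruct phi_boundary_limit as (L & HL & Hl & _). destruct (Hl mu HL) as (d & Hd & Hs).
  exists d. split; auto. intros s Hs' w Hw. apply (inf_bd_gt K Rs phi s); auto.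
Qed.

Lemma axis_point_dist s : 0 <= s <= 2 * r ->
  pdist (shift 0 s (Rs 0%nat)) (Rs 0%nat) = s /\ A_closure K Rs s (shift 0 s (Rs 0%nat)).
Proof.
  intros Hs. split; [rewrite pdist_shift_self, Rabs_pos_eq; lra|].
  intros j Hj. destruct (Nat.eq_dec j 0) as [->|Hn]; [rewrite pdist_shift_self, Rabs_pos_eq; lra|].
  destruct r_le_R0 as [_ HR]. specialize (HR 0%nat j ltac:(lia) Hj ltac:(auto)).
  pose proof (pdist_triangle (Rs 0%nat) (shift 0 s (Rs 0%nat)) (Rs j)) as Ht.
  rewrite (pdist_sym (Rs 0%nat) (shift 0 s (Rs 0%nat))), pdist_shift_self, Rabs_pos_eq in Ht by lra. lra.
Qed.

Lemma bdA_nonempty s : 0 <= s <= 2 * r -> exists w, bdA K Rs s w.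
Proof.
  intros Hs. destruct (axis_point_dist s Hs) as [Hd Hcl].
  exists (shift 0 s (Rs 0%nat)). split; auto. exists 0%nat. split; [lia | auto].
Qed.

(** * The lower bound by [omega_a^-] *)

Lemma omega_sub_le_phi_of_boundary b s j0 :
  (j0 < K)%nat -> r < s <= 2 * r ->
  (forall w, bdA K Rs s w -> mu < phi w) ->
  (forall w, bdA K Rs s w -> sqrt (c_S * / r ^ 4 * / phi w) - 1 < b) ->
  -1 < b /\ forall z, A_set K Rs s z -> omega_sub b r (pdist z (Rs j0)) <= phi z.
Proof.
  intros Hj0 Hs Hmu Hsq.
  assert (Hbd : forall w, bdA K Rs s w -> -1 < b /\ c_S * / r ^ 4 / (1 + b) ^ 2 < phi w).
  { intros w Hw. apply div_sqr_lt_of_sqrt_lt; [|specialize (Hmu w Hw); lra | apply Hsq, Hw].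
    pose proof c_S_pos. apply Rmult_lt_0_compat; [|apply Rinv_0_lt_compat, pow_lt]; lra. }
  assert (Hb : -1 < b) by (destruct (bdA_nonempty s ltac:(lra)) as [w Hw]; apply (Hbd w Hw)).
  split; auto.
  assert (HU : forall rho, r < rho -> 0 < bracket b r rho)
    by (intros; apply bracket_pos; lra).
  intros z Hz. rewrite <- (Rplus_0_r (omega_sub _ _ _)), <- potential_single.
  apply (potential_le_phi _ (omega_sub' b r) (omega_sub'' b r) _ _ s); auto; try lra.
  - apply nuclei_list_single, Hj0.
  - intros rho Hrho. apply omega_sub_derivs; try lra. specialize (HU rho Hrho). lra.
  - apply omega_sub_vanishes; auto.
  - intros w Hw. rewrite potential_single, Rplus_0_r.
    assert (s <= pdist w (Rs j0)) by (apply (proj1 Hw); auto).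
    pose proof (omega_sub_le_at_r b r (pdist w (Rs j0)) Hb r_pos ltac:(lra)).
    destruct (Hbd w Hw) as [_ Hlt]. unfold Rdiv in *. lra.
  - intros x Hx. rewrite potential_single, Rplus_0_r, potential_laplacian_single.
    set (rho := pdist x (Rs j0)). intros Hlt Hle.
    assert (Hrho : r < rho) by (unfold rho; specialize (Hx j0 Hj0); lra).
    pose proof (omega_sub_subsolution b r rho ltac:(lra) (HU rho Hrho)).
    pose proof (omega_sub_pos b r rho ltac:(lra) (HU rho Hrho)).
    pose proof (pos32_lt (phi x - mu) (omega_sub b r rho) ltac:(lra) ltac:(lra)).
    pose proof tf_coeff_pos. nra.
Qed.

Lemma boundary_data_of_a a :
  a_of K Rs phi r = Finite a -> forall b, a < b -> forall d, 0 < d ->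
  exists s, r < s < r + d /\ s <= 2 * r /\ (forall w, bdA K Rs s w -> mu < phi w) /\
    (forall w, bdA K Rs s w -> sqrt (c_S * / r ^ 4 * / phi w) - 1 < b).
Proof.
  intros Ha b Hab d Hd. destruct boundary_gt_mu as (d1 & Hd1 & Hmu).
  set (d' := Rmin d (Rmin d1 r)).
  assert (Hd' : 0 < d' /\ d' <= d /\ d' <= d1 /\ d' <= r).
  { unfold d'. pose proof (Rmin_l d (Rmin d1 r)); pose proof (Rmin_r d (Rmin d1 r)).
    pose proof (Rmin_l d1 r); pose proof (Rmin_r d1 r).
    pose proof (Rmin_pos d (Rmin d1 r) Hd (Rmin_pos d1 r Hd1 r_pos)). lra. }
  destruct (liminf_right_lt _ r a b Ha Hab d' ltac:(lra)) as (s & Hs & Hgs).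
  exists s. repeat split; try lra.
  - apply Hmu. lra.
  - apply (sup_bd_lt K Rs _ s b Hgs).
Qed.

Lemma omega_sub_le_phi a :
  a_of K Rs phi r = Finite a ->
  forall j0, (j0 < K)%nat -> forall z, A_set K Rs r z ->
    0 < bracket a r (pdist z (Rs j0)) /\ omega_sub a r (pdist z (Rs j0)) <= phi z.
Proof.
  intros Ha j0 Hj0 z Hz.
  destruct (A_set_margin K Rs r z Hz) as (d & Hd & Hm).
  assert (Hb : forall b, a < b -> -1 < b /\ omega_sub b r (pdist z (Rs j0)) <= phi z).
  { intros b Hab. destruct (boundary_data_of_a a Ha b Hab d Hd) as (s & Hs & Hs2 & Hmu & Hsq).
    destruct (omega_sub_le_phi_of_boundary b s j0 Hj0 ltac:(lra) Hmu Hsq) as [Hb1 H].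
    split; auto. apply H, Hm. lra. }
  set (rho := pdist z (Rs j0)) in *.
  assert (Hrho : r < rho) by (apply Hz; auto).
  assert (Ha1 : -1 <= a).
  { apply Rnot_lt_le. intro. destruct (Hb ((a + -1) / 2) ltac:(lra)). lra. }
  assert (HU : 0 < bracket a r rho).
  { pose proof (ratio_pow_lt_1 r rho r_pos Hrho).
    destruct (ratio_pow_bounds r rho r_pos ltac:(lra)) as [[E1 _] _].
    unfold bracket. destruct (Rle_or_lt 0 a); nra. }
  split; auto.
  apply Rnot_lt_le. intros Hlt.
  destruct (continuous_R_eps _ a (omega_sub_continuous_in_b a r rho ltac:(lra) ltac:(lra))
              (omega_sub a r rho - phi z) ltac:(lra)) as (d' & Hd' & Hc).
  specialize (Hc (a + d' / 2) ltac:(rewrite Rabs_pos_eq; lra)).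
  destruct (Hb (a + d' / 2) ltac:(lra)) as [_ Hle]. apply Rabs_lt_between in Hc. lra.
Qed.

(** * The lower bound by [nu] *)

Lemma nu_finite a :
  a_of K Rs phi r = Finite a ->
  exists nuv, nu a mu r = Finite nuv /\ 0 <= nuv /\
    forall j, (j < K)%nat -> forall z, A_set K Rs r z ->
      nuv <= mu * pdist z (Rs j) \/ nuv <= omega_sub a r (pdist z (Rs j)) * pdist z (Rs j).
Proof.
  intros Ha.
  assert (Hmax0 : forall u v, Rbar_le (Finite 0) u -> Rbar_le (Finite 0) (Rbar_maxr u v)).
  { intros u v H. unfold Rbar_maxr. destruct (Rbar_lt_dec u v); auto.
    apply Rbar_le_trans with u; auto. apply Rbar_lt_le; auto. }
  assert (H0 : Rbar_le (Finite 0) (nu a mu r)).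
  { apply Rbar_glb_ge_lower. intros y (x' & Hx' & ->). apply Hmax0.
    pose proof (pnorm_ge0 x'). simpl. apply Rmult_le_pos; lra. }
  assert (Hel : forall j, (j < K)%nat -> forall z, A_set K Rs r z ->
    Rbar_le (nu a mu r) (Rbar_maxr (Finite (mu * pdist z (Rs j)))
                                    (Finite (omega_sub a r (pdist z (Rs j)) * pdist z (Rs j))))).
  { intros j Hj z Hz. apply Rbar_glb_le_elem. exists (psub z (Rs j)). split.
    - specialize (Hz j Hj). unfold pdist in Hz. lra.
    - destruct (omega_sub_le_phi a Ha j Hj z Hz) as [HU _]. pose proof (Hz j Hj).
      unfold omega_minus. fold (pdist z (Rs j)). rewrite Rpower_ratio_pow by lra.
      fold (bracket a r (pdist z (Rs j))).
      destruct (Req_EM_T (bracket a r (pdist z (Rs j))) 0); [lra | reflexivity]. }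
  assert (Hz0 : A_set K Rs r (shift 0 (2 * r) (Rs 0%nat))).
  { destruct (axis_point_dist (2 * r) ltac:(lra)) as [_ Hcl]. intros j Hj. specialize (Hcl j Hj). lra. }
  pose proof (Hel 0%nat ltac:(lia) _ Hz0) as Hel0.
  destruct (nu a mu r) as [nuv| |] eqn:En.
  - exists nuv. split; auto. split; [exact H0|].
    intros j Hj z Hz. specialize (Hel j Hj z Hz).
    unfold Rbar_maxr in Hel. destruct (Rbar_lt_dec _ _); simpl in Hel; auto.
  - unfold Rbar_maxr in Hel0. destruct (Rbar_lt_dec _ _); simpl in Hel0; contradiction.
  - contradiction.
Qed.

Lemma nu_div_le_max a nuv :
  a_of K Rs phi r = Finite a -> nu a mu r = Finite nuv ->
  forall j, (j < K)%nat -> forall w, A_set K Rs r w -> nuv / pdist w (Rs j) <= Rmax mu (phi w).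
Proof.
  intros Ha En j Hj w Hw. destruct (nu_finite a Ha) as (nuv' & En' & _ & Hnu).
  rewrite En in En'. injection En' as <-.
  pose proof (Hw j Hj) as Hrw. destruct (omega_sub_le_phi a Ha j Hj w Hw) as [_ HF].
  apply Rmult_le_reg_r with (pdist w (Rs j)); [lra|].
  unfold Rdiv. rewrite Rmult_assoc, Rinv_l, Rmult_1_r by lra.
  destruct (Hnu j Hj w Hw) as [H|H].
  - pose proof (Rmax_l mu (phi w)). nra.
  - pose proof (Rmax_r mu (phi w)). nra.
Qed.

(** [coulomb (nu - eta) (eta r)] stays below [nu / rho <= Rmax mu phi] and is
    strictly subharmonic, while [phi] is harmonic where [phi < mu]. *)
Lemma coulomb_le_phi a nuv eta j s :
  a_of K Rs phi r = Finite a -> nu a mu r = Finite nuv -> 0 < eta -> (j < K)%nat ->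
  r < s -> (forall w, bdA K Rs s w -> mu < phi w) ->
  forall x, A_set K Rs s x -> coulomb (nuv - eta) (eta * r) (pdist x (Rs j)) <= phi x.
Proof.
  intros Ha En Heta Hj Hs Hmu x Hx.
  assert (Hbelow : forall rho, r < rho -> coulomb (nuv - eta) (eta * r) rho <= nuv / rho).
  { intros rho Hrho. unfold coulomb.
    replace ((nuv - eta) / rho + eta * r / rho ^ 2) with (nuv / rho - eta * (rho - r) / rho ^ 2)
      by (field; lra).
    assert (0 <= eta * (rho - r) / rho ^ 2) by (apply Rdiv_le_0_compat; [nra | apply pow_lt; lra]).
    lra. }
  rewrite <- (Rplus_0_r (coulomb _ _ _)), <- potential_single.
  apply (potential_le_phi _ (coulomb' (nuv - eta) (eta * r)) (coulomb'' (nuv - eta) (eta * r))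
           _ _ s); auto; try lra.
  - apply nuclei_list_single, Hj.
  - intros rho Hrho. apply coulomb_derivs. lra.
  - apply coulomb_vanishes.
  - intros w Hw. rewrite potential_single, Rplus_0_r.
    assert (HwA : A_set K Rs r w) by exact (A_closure_A_set s w ltac:(lra) (proj1 Hw)).
    assert (s <= pdist w (Rs j)) by (apply (proj1 Hw); auto).
    pose proof (Hbelow (pdist w (Rs j)) ltac:(lra)).
    pose proof (nu_div_le_max a nuv Ha En j Hj w HwA). pose proof (Hmu w Hw).
    rewrite Rmax_right in * by lra. lra.
  - intros x0 Hx0. rewrite potential_single, Rplus_0_r, potential_laplacian_single.
    assert (HA : A_set K Rs r x0) by (intros k Hk; specialize (Hx0 k Hk); lra).
    set (rho := pdist x0 (Rs j)). intros Hlt Hle.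
    assert (Hrho : r < rho) by (unfold rho; specialize (Hx0 j Hj); lra).
    rewrite coulomb_radial_laplacian in Hle by lra.
    pose proof (Hbelow rho Hrho). pose proof (nu_div_le_max a nuv Ha En j Hj x0 HA). fold rho in H0.
    assert (Hphi : phi x0 < mu).
    { destruct (Rle_or_lt mu (phi x0)); [rewrite Rmax_right in * by lra; lra | lra]. }
    rewrite pos32_nonpos in Hle by lra.
    assert (0 < 2 * (eta * r) / rho ^ 4) by (apply Rdiv_lt_0_compat; [nra | apply pow_lt; lra]).
    lra.
Qed.

Lemma nu_div_le_phi a :
  a_of K Rs phi r = Finite a -> forall j, (j < K)%nat -> forall x, A_set K Rs r x ->
  Rbar_le (Rbar_mult (nu a mu r) (Finite (/ pdist x (Rs j)))) (Finite (phi x)).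
Proof.
  intros Ha j Hj x Hx.
  destruct (nu_finite a Ha) as (nuv & En & _ & _). rewrite En. simpl.
  destruct boundary_gt_mu as (d1 & Hd1 & Hmu).
  destruct (A_set_margin K Rs r x Hx) as (d2 & Hd2 & Hm).
  set (s := r + Rmin d1 d2 / 2).
  assert (Hs : r < s < r + d1 /\ s < r + d2).
  { unfold s. pose proof (Rmin_l d1 d2); pose proof (Rmin_r d1 d2).
    pose proof (Rmin_pos d1 d2 Hd1 Hd2). lra. }
  set (rho := pdist x (Rs j)).
  assert (Hrho : r < rho) by (apply Hx; auto).
  apply le_epsilon. intros eps Heps.
  pose proof (coulomb_le_phi a nuv (eps * rho) j s Ha En ltac:(nra) Hj ltac:(lra)
                (fun w => Hmu s ltac:(lra) w) x (Hm s ltac:(lra))) as Hc.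
  fold rho in Hc. unfold coulomb in Hc.
  replace ((nuv - eps * rho) / rho + eps * rho * r / rho ^ 2) with (nuv / rho - eps * (rho - r) / rho)
    in Hc by (field; lra).
  assert (eps * (rho - r) / rho <= eps).
  { apply Rmult_le_reg_r with rho; [lra|].
    replace (eps * (rho - r) / rho * rho) with (eps * (rho - r)) by (field; lra). nra. }
  unfold Rdiv in *. lra.
Qed.

(** * The upper bound by [omega_A^+] *)

Lemma phi_le_omega_sup_sum_of_boundary B s :
  -1 < B -> r < s ->
  (forall w, bdA K Rs s w -> phi w <= omega_sup B r s + mu) ->
  forall x, A_set K Rs s x -> phi x <= potential (omega_sup B r) (seq 0 K) mu x.
Proof.
  intros HB Hs Hbd.
  assert (HU : forall rho, r <= rho -> 0 < bracket B r rho) by (intros; apply bracket_pos; lra).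
  assert (Hjs : nuclei_list (seq 0 K)) by exact (in_seq0 K).
  assert (Hge0 : forall y, A_closure K Rs s y -> forall j, In j (seq 0 K) ->
            0 <= omega_sup B r (pdist y (Rs j))).
  { intros y Hy j Hj. specialize (Hy j (Hjs j Hj)). apply omega_sup_ge0; [lra | apply HU; lra]. }
  apply (phi_le_potential _ (omega_sup' B r) (omega_sup'' B r)); auto.
  - intros rho Hrho. apply omega_sup_derivs; lra.
  - apply omega_sup_vanishes; auto.
  - intros w Hw. unfold potential. apply Rle_trans with (omega_sup B r s + mu); [auto|].
    destruct Hw as [Hw1 (k & Hk & Hk2)]. rewrite <- Hk2.
    pose proof (sum_map_ge_term (seq 0 K) (fun j => omega_sup B r (pdist w (Rs j))) k
                  ltac:(apply in_seq; lia) (Hge0 w Hw1)). lra.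
  - intros x Hx. unfold potential, potential_laplacian.
    set (S := lsum (fun j => omega_sup B r (pdist x (Rs j))) (seq 0 K)). intros Hlt Hle.
    assert (Hcl : A_closure K Rs s x) by (intros j Hj; specialize (Hx j Hj); lra).
    assert (HS : 0 <= S) by (apply sum_map_nonneg, Hge0, Hcl).
    assert (Hsuper : lsum (fun j => radial_laplacian (omega_sup' B r) (omega_sup'' B r)
                                        (pdist x (Rs j))) (seq 0 K) <= tf_coeff * (S * sqrt S)).
    { eapply Rle_trans.
      - apply (sum_map_le _ _ (fun j => tf_coeff * (omega_sup B r (pdist x (Rs j)) *
                                                    sqrt (omega_sup B r (pdist x (Rs j)))))).
        intros j Hj. specialize (Hx j (Hjs j Hj)).
        apply omega_sup_supersolution; [lra | apply HU; lra].
      - rewrite sum_map_scal. apply Rmult_le_compat_l; [apply Rlt_le, tf_coeff_pos|].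
        apply sum_map_pow32_le, Hge0, Hcl. }
    rewrite pos32_pos in Hle by lra.
    pose proof (pow32_lt S (phi x - mu) HS ltac:(lra)). pose proof tf_coeff_pos. nra.
Qed.

Lemma boundary_data_of_A A B :
  A_of K Rs phi mu r = Finite A -> A < B -> forall d, 0 < d ->
  exists s, r < s < r + d /\ -1 < B /\ forall w, bdA K Rs s w -> phi w <= omega_sup B r s + mu.
Proof.
  intros HA HAB d Hd. destruct boundary_gt_mu as (d1 & Hd1 & Hmu).
  set (b' := (A + B) / 2).
  destruct (continuous_R_eps _ r (bracket_continuous_in_rho B r r_pos) (B - b') ltac:(unfold b'; lra))
    as (d3 & Hd3 & Hbr).
  set (d' := Rmin (Rmin d d1) (Rmin r d3)).
  assert (Hd' : 0 < d' /\ d' <= d /\ d' <= d1 /\ d' <= r /\ d' <= d3).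
  { unfold d'. pose proof (Rmin_l (Rmin d d1) (Rmin r d3)); pose proof (Rmin_r (Rmin d d1) (Rmin r d3)).
    pose proof (Rmin_l d d1); pose proof (Rmin_r d d1); pose proof (Rmin_l r d3); pose proof (Rmin_r r d3).
    pose proof (Rmin_pos _ _ (Rmin_pos d d1 Hd Hd1) (Rmin_pos r d3 r_pos Hd3)). lra. }
  destruct (liminf_right_lt _ r A b' HA ltac:(unfold b'; lra) d' ltac:(lra)) as (s & Hs & Hgs).
  pose proof (sup_bd_lt K Rs _ s b' Hgs) as Hsb. cbv beta in Hsb.
  pose proof c_S_pos.
  assert (Hs4 : 0 < s ^ 4) by (apply pow_lt; lra).
  assert (HB : -1 < B).
  { destruct (bdA_nonempty s ltac:(lra)) as [w Hw]. specialize (Hsb w Hw).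
    specialize (Hmu s ltac:(lra) w Hw).
    assert (0 < / c_S * s ^ 4 * (phi w - mu))
      by (apply Rmult_lt_0_compat; [apply Rmult_lt_0_compat; [apply Rinv_0_lt_compat|]|]; lra).
    unfold b' in *. lra. }
  assert (HbB : 1 + b' <= bracket B r s).
  { specialize (Hbr s ltac:(rewrite Rabs_pos_eq; lra)). apply Rabs_lt_between in Hbr.
    unfold bracket in *. rewrite ratio_pow_diag in Hbr by exact r_pos. lra. }
  exists s. repeat split; try lra. intros w Hw. specialize (Hsb w Hw).
  unfold omega_sup. apply Rle_trans with (c_S / s ^ 4 * (1 + b') + mu);
    [|apply Rplus_le_compat_r, Rmult_le_compat_l; [apply Rlt_le, Rdiv_lt_0_compat|]; lra].
  apply Rmult_lt_compat_l with (r := c_S / s ^ 4) in Hsb; [|apply Rdiv_lt_0_compat; lra].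
  replace (c_S / s ^ 4 * (/ c_S * s ^ 4 * (phi w - mu) - 1)) with (phi w - mu - c_S / s ^ 4)
    in Hsb by (field; lra).
  lra.
Qed.

Lemma phi_le_omega_sup_sum A :
  A_of K Rs phi mu r = Finite A -> forall x, A_set K Rs r x ->
  phi x <= potential (omega_sup A r) (seq 0 K) mu x.
Proof.
  intros HA x Hx. destruct (A_set_margin K Rs r x Hx) as (d & Hd & Hm).
  set (C := lsum (fun j => c_S / pdist x (Rs j) ^ 4 * ratio_pow r (pdist x (Rs j))) (seq 0 K)).
  assert (HC : 0 <= C).
  { apply sum_map_nonneg. intros j Hj. pose proof c_S_pos. specialize (Hx j (in_seq0 K j Hj)).
    destruct (ratio_pow_bounds r (pdist x (Rs j)) r_pos ltac:(lra)) as [[E1 _] _].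
    apply Rmult_le_pos; [apply Rlt_le, Rdiv_lt_0_compat; [|apply pow_lt]|]; lra. }
  assert (Haffine : forall B, potential (omega_sup B r) (seq 0 K) mu x
                            = potential (omega_sup A r) (seq 0 K) mu x + (B - A) * C).
  { intros B. unfold potential, C. rewrite <- sum_map_scal.
    rewrite (sum_map_ext _ _ _ (fun j _ => omega_sup_affine A B r (pdist x (Rs j)))),
      sum_map_plus.
    ring. }
  apply le_epsilon. intros eps Heps.
  set (B := A + eps / (C + 1)).
  assert (HAB : A < B) by (unfold B; assert (0 < eps / (C + 1)) by (apply Rdiv_lt_0_compat; lra); lra).
  destruct (boundary_data_of_A A B HA HAB d Hd) as (s & Hs & HB & Hbd).
  pose proof (phi_le_omega_sup_sum_of_boundary B s HB ltac:(lra) Hbd x (Hm s ltac:(lra))) as Hle.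
  rewrite Haffine in Hle.
  assert ((B - A) * C <= eps).
  { unfold B. replace (A + eps / (C + 1) - A) with (eps / (C + 1)) by ring.
    apply Rmult_le_reg_r with (C + 1); [lra|].
    replace (eps / (C + 1) * C * (C + 1)) with (eps * C) by (field; lra). nra. }
  lra.
Qed.

End Thomas_Fermi.

Theorem theorem2 (K : nat) (Rs : nat -> pt) (r mu : R) (phi : pt -> R) :
  (1 <= K)%nat ->
  (forall i j, (i < K)%nat -> (j < K)%nat -> i <> j -> Rs i <> Rs j) ->
  0 < r -> le_R0 K Rs r ->
  0 <= mu ->
  (* phi continuous on A_r *)
  (forall x, A_set K Rs r x -> continuous phi x) ->
  (* phi vanishes at infinity *)
  (forall eps, 0 < eps -> exists M, forall x, A_set K Rs r x -> M < pnorm x ->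
      Rabs (phi x) < eps) ->
  (* the Thomas-Fermi type equation, classically *)
  C2_on (A_set K Rs r) phi ->
  (forall x, A_set K Rs r x ->
      laplacian phi x = 4 * PI * Rpower c_TF (- (3 / 2)) * pos32 (phi x - mu)) ->
  (* lim_{s -> r+} inf_{dA_s} phi exists and is > mu *)
  (exists L : Rbar, Rbar_lt (Finite mu) L /\
      lim_right_Rbar (fun s => inf_bd K Rs phi s) r L) ->
  forall x, A_set K Rs r x ->
    (forall a : R, a_of K Rs phi r = Finite a ->
       forall j, (j < K)%nat ->
         Rbar_le (omega_minus a r (psub x (Rs j))) (Finite (phi x)) /\
         Rbar_le (Rbar_mult (nu a mu r) (Finite (/ pdist x (Rs j)))) (Finite (phi x))) /\
    (forall A : R, A_of K Rs phi mu r = Finite A ->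
       phi x <= sum_nuclei K (fun j => omega_plus A r (psub x (Rs j))) + mu).
Proof.
  (* The nuclei are distinct by [le_R0 K Rs r] and [0 < r]. *)
  intros HK _ Hr HR0 Hmu Hcont Hvan HC2 Heq Hlim x Hx. split.
  - intros a Ha j Hj.
    destruct (omega_sub_le_phi K Rs r mu phi HK Hr HR0 Hmu Hcont Hvan HC2 Heq Hlim a Ha j Hj x Hx)
      as [HU Hle].
    split; [|exact (nu_div_le_phi K Rs r mu phi HK Hr HR0 Hmu Hcont Hvan HC2 Heq Hlim a Ha j Hj x Hx)].
    pose proof (Hx j Hj). unfold omega_minus. fold (pdist x (Rs j)).
    rewrite Rpower_ratio_pow by lra. fold (bracket a r (pdist x (Rs j))).
    destruct (Req_EM_T (bracket a r (pdist x (Rs j))) 0); [lra | exact Hle].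
  - intros A HA.
    pose proof (phi_le_omega_sup_sum K Rs r mu phi HK Hr HR0 Hmu Hcont Hvan HC2 Heq Hlim A HA x Hx).
    unfold sum_nuclei, potential in *.
    erewrite sum_map_ext; [eassumption|]. intros j Hj.
    assert (r < pdist x (Rs j)) by (apply Hx, (in_seq0 K j Hj)).
    unfold omega_plus, omega_sup. fold (pdist x (Rs j)).
    rewrite Rpower_ratio_pow by lra. reflexivity.
Qed.
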